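(* Let $\rho>1$ and $a,b>0$. Let $(\lambda_k)_{k\in\mathbb{N}}$ be a strictly increasing sequence of positive real numbers such that $$\liminf_{k\to\infty}\frac{\lambda_k}{k^{1/\rho}}<\Big(\frac{2}{b\rho e}\Big)^{1/\rho},$$ and let $\Lambda=\{\pm\lambda_k:k\in\mathbb{N}\}\subset\mathbb{R}$. Then $\Lambda$ is a uniqueness set for $\mathfrak{G}_{a,b,\rho}$: if $f\in\mathfrak{G}_{a,b,\rho}$ and $f(\lambda)=0$ for all $\lambda\in\Lambda$, then $f\equiv 0$ on $\mathbb{C}$.
   Context: For $\rho>1$ and $a,b>0$, $\mathfrak{G}_{a,b,\rho}$ is the set of entire functions $f$ for which there is a constant $C>0$ with $|f(x+iy)|\le Ce^{-a|x|^\rho+b|y|^\rho}$ for all $x,y\in\mathbb{R}$. A set $\Lambda\subset\mathbb{C}$ is a uniqueness set for a linear space $U$ of entire functions if every $f\in U$ vanishing on $\Lambda$ is identically zero. *)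

From Stdlib Require Import Reals.
From Coquelicot Require Import Coquelicot.
Open Scope R_scope.

(* |x|^r with the convention 0^r = 0 (Stdlib's Rpower 0 r = 1). *)
Definition abspow (x r : R) : R :=
  match Rle_lt_dec (Rabs x) 0 with
  | left _ => 0
  | right _ => Rpower (Rabs x) r
  end.

Definition entire (f : C -> C) : Prop :=
  forall z : C, @ex_derive C_AbsRing C_NormedModule f z.

Definition Gspace (a b rho : R) (f : C -> C) : Prop :=
  entire f /\
  exists K : R, 0 < K /\
    forall x y : R,
      Cmod (f (RtoC x + Ci * RtoC y)%C) <= K * exp (- a * abspow x rho + b * abspow y rho).

Definition uniqueness_set (U : (C -> C) -> Prop) (Lam : C -> Prop) : Prop :=
  forall f, U f -> (forall z, Lam z -> f z = 0%C) -> forall z, f z = 0%C.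

(* Suppose f in G_{a,b,rho} vanishes on Lambda but f(z0) <> 0.  Let r_k = lambda_k + |z0|.
   The closed disc of radius r_k about z0 contains the 2k+2 zeros +-lambda_0, ..., +-lambda_k,
   so Jensen's inequality on the circle of radius e^{1/rho} r_k about z0 gives
     |f(z0)| e^{(2k+2)/rho} <= max |f| <= K exp (b (|z0| + e^{1/rho} r_k)^rho),
   using only the growth of f in the imaginary direction.  If lambda_k < c k^{1/rho} with
   c < c2 < (2/(b rho e))^{1/rho}, the exponent on the right is at most b e c2^rho k for large k,
   and b e c2^rho < 2/rho: the left-hand side wins along such k.

   Jensen's inequality follows from the mean value property by replacing the zeros one at a
   time by their reflections in the circle (Blaschke factors). *)

From Stdlib Require Import Reals Lra Psatz Classical List ZArith.
From Coquelicot Require Import Coquelicot.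
Open Scope R_scope.

(* Coquelicot's filter-based notions are only needed to call its integral and its fundamental
   theorem of calculus; everywhere else these explicit epsilon-delta forms are used. *)
Definition cdiff_eps (f : C -> C) (z l : C) : Prop :=
  forall eps, 0 < eps -> exists d, 0 < d /\ forall w, Cmod (w - z) < d ->
    Cmod (f w - f z - l * (w - z))%C <= eps * Cmod (w - z).

Definition rdiff_eps (g : R -> C) (t : R) (l : C) : Prop :=
  forall eps, 0 < eps -> exists d, 0 < d /\ forall u, Rabs (u - t) < d ->
    Cmod (g u - g t - RtoC (u - t) * l)%C <= eps * Rabs (u - t).

Definition rcont (g : R -> C) (t : R) : Prop :=
  forall eps, 0 < eps -> exists d, 0 < d /\ forall u, Rabs (u - t) < d ->
    Cmod (g u - g t)%C < eps.

Definition ccont (f : C -> C) (z : C) : Prop :=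
  forall eps, 0 < eps -> exists d, 0 < d /\ forall w, Cmod (w - z) < d ->
    Cmod (f w - f z)%C < eps.

Lemma Cmod_le_sum (z : C) : Cmod z <= Rabs (fst z) + Rabs (snd z).
Proof.
  unfold Cmod. apply Rsqr_incr_0_var.
  - rewrite Rsqr_sqrt by nra. unfold Rsqr.
    pose proof (Rabs_pos (fst z)); pose proof (Rabs_pos (snd z)).
    rewrite <- (pow2_abs (fst z)), <- (pow2_abs (snd z)). nra.
  - pose proof (Rabs_pos (fst z)); pose proof (Rabs_pos (snd z)). lra.
Qed.

Lemma Cmod_fst (z : C) : Rabs (fst z) <= Cmod z.
Proof. apply re_le_Cmod. Qed.

Lemma Cmod_snd (z : C) : Rabs (snd z) <= Cmod z.
Proof. pose proof (Rmax_Cmod z). pose proof (Rmax_r (Rabs (fst z)) (Rabs (snd z))). lra. Qed.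

Lemma Rle_eps_eq_0 (x : R) : 0 <= x -> (forall e, 0 < e -> x <= e) -> x = 0.
Proof. intros H1 H2. destruct (Req_dec x 0); auto. specialize (H2 (x / 2)). lra. Qed.

Lemma Rabs_sub_le_between a b t : Rmin a b <= t <= Rmax a b -> Rabs (t - a) <= Rabs (b - a).
Proof.
  unfold Rmin, Rmax. intros Ht. destruct (Rle_dec a b); apply Rabs_le;
    unfold Rabs; destruct (Rcase_abs (b - a)); lra.
Qed.

Lemma prod_norm_Cmod (z : C) : @norm R_AbsRing C_R_NormedModule z = Cmod z.
Proof.
  change (sqrt (Rabs (fst z) ^ 2 + Rabs (snd z) ^ 2) = Cmod z).
  unfold Cmod. rewrite !pow2_abs. reflexivity.
Qed.

Lemma ball_C (z w : C) (e : R) : Cmod (w - z) < e -> ball z e w.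
Proof. intro H. apply C_NormedModule_mixin_compat1. exact H. Qed.

Lemma is_derive_cdiff_eps (f : C -> C) z l :
  @is_derive C_AbsRing C_NormedModule f z l -> cdiff_eps f z l.
Proof.
  intros [_ H] eps Heps.
  assert (Hz : is_filter_lim (locally z) z) by (intros P HP; exact HP).
  specialize (H z Hz (mkposreal eps Heps)).
  destruct H as [d Hd].
  exists (d / 2). split. { destruct d; simpl; lra. }
  intros w Hw. rewrite Cmult_comm. apply (Hd w). change (Cmod (w - z) < d). destruct d; simpl in *; lra.
Qed.

Lemma entire_cdiff_eps (f : C -> C) : entire f -> forall z, exists l, cdiff_eps f z l.
Proof.
  intros H z. destruct (H z) as [l Hl]. exists l. now apply is_derive_cdiff_eps.
Qed.

Lemma rdiff_eps_is_derive (g : R -> C) t l :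
  rdiff_eps g t l -> @is_derive R_AbsRing C_R_NormedModule g t l.
Proof.
  intros H. split.
  - apply is_linear_scal_l.
  - intros x Hx. apply (@is_filter_lim_locally_unique R_AbsRing R_NormedModule) in Hx. subst x.
    intros eps. destruct (H eps (cond_pos eps)) as [d [Hd Hd']].
    exists (mkposreal d Hd). intros u Hu. simpl in Hu.
    unfold AbsRing_ball, abs, minus, plus, opp in Hu; simpl in Hu.
    rewrite !prod_norm_Cmod.
    specialize (Hd' u Hu).
    change (norm (minus u t)) with (Rabs (u - t)).
    match goal with |- Cmod ?X <= _ => assert (E : X = (g u - g t - RtoC (u - t) * l)%C) end.
    { destruct (g u), (g t), l. unfold minus, plus, opp, scal; simpl.
      unfold prod_plus, prod_opp, prod_scal; simpl. unfold mult, plus, opp; simpl.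
      unfold Cminus, Cplus, Copp, Cmult, RtoC; simpl. unfold scal; simpl. unfold mult; simpl.
      f_equal; ring. }
    rewrite E. exact Hd'.
Qed.

Lemma rcont_continuous (g : R -> C) t :
  rcont g t -> @continuous R_UniformSpace C_UniformSpace g t.
Proof.
  intros H. apply filterlim_locally. intros eps.
  destruct (H eps (cond_pos eps)) as [d [Hd Hd']].
  exists (mkposreal d Hd). intros u Hu. apply ball_C. apply Hd'. exact Hu.
Qed.

Definition CRInt (g : R -> C) (a b : R) : C := @RInt C_R_CompleteNormedModule g a b.
Definition ex_CRInt (g : R -> C) (a b : R) : Prop := @ex_RInt C_R_NormedModule g a b.
Definition is_CRInt (g : R -> C) (a b : R) (I : C) : Prop := @is_RInt C_R_NormedModule g a b I.

Lemma ex_CRInt_cont g a b : (forall t, Rmin a b <= t <= Rmax a b -> rcont g t) -> ex_CRInt g a b.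
Proof.
  intros H. unfold ex_CRInt.
  apply (@ex_RInt_continuous C_R_CompleteNormedModule).
  intros t Ht. apply rcont_continuous. now apply H.
Qed.

Lemma CRInt_correct g a b : ex_CRInt g a b -> is_CRInt g a b (CRInt g a b).
Proof. intros H. apply (@RInt_correct C_R_CompleteNormedModule). exact H. Qed.

Lemma CRInt_unique g a b I : is_CRInt g a b I -> CRInt g a b = I.
Proof. intros H. apply (@is_RInt_unique C_R_CompleteNormedModule). exact H. Qed.

Lemma is_CRInt_plus g h a b I J : is_CRInt g a b I -> is_CRInt h a b J ->
  is_CRInt (fun t => g t + h t)%C a b (I + J)%C.
Proof. intros H1 H2. apply (@is_RInt_plus C_R_NormedModule g h a b I J H1 H2). Qed.

Lemma is_CRInt_minus g h a b I J : is_CRInt g a b I -> is_CRInt h a b J ->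
  is_CRInt (fun t => g t - h t)%C a b (I - J)%C.
Proof. intros H1 H2. apply (@is_RInt_minus C_R_NormedModule g h a b I J H1 H2). Qed.

Lemma is_CRInt_ext g h a b I : (forall t, Rmin a b < t < Rmax a b -> g t = h t) ->
  is_CRInt g a b I -> is_CRInt h a b I.
Proof. intros E H. apply (@is_RInt_ext C_R_NormedModule g h a b I E H). Qed.

Lemma is_CRInt_scal g a b I (c : C) : is_CRInt g a b I -> is_CRInt (fun t => c * g t)%C a b (c * I)%C.
Proof.
  intros H.
  assert (H1 := @is_RInt_fct_extend_fst R_NormedModule R_NormedModule g a b I H).
  assert (H2 := @is_RInt_fct_extend_snd R_NormedModule R_NormedModule g a b I H).
  destruct c as [c1 c2].
  apply (@is_RInt_fct_extend_pair R_NormedModule R_NormedModule (fun t => ((c1,c2) * g t)%C) a b).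
  - simpl.
    apply (@is_RInt_ext R_NormedModule (fun t => minus (scal c1 (fst (g t))) (scal c2 (snd (g t))))).
    { intros t _. unfold minus, plus, opp, scal; simpl. unfold mult; simpl. ring. }
    replace (c1 * fst I - c2 * snd I) with (@minus R_NormedModule (scal c1 (fst I)) (scal c2 (snd I))).
    2:{ unfold minus, plus, opp, scal; simpl. unfold mult; simpl. ring. }
    apply (@is_RInt_minus R_NormedModule); apply (@is_RInt_scal R_NormedModule); assumption.
  - simpl.
    apply (@is_RInt_ext R_NormedModule (fun t => plus (scal c1 (snd (g t))) (scal c2 (fst (g t))))).
    { intros t _. unfold minus, plus, opp, scal; simpl. unfold mult; simpl. ring. }
    replace (c1 * snd I + c2 * fst I) with (@plus R_NormedModule (scal c1 (snd I)) (scal c2 (fst I))).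
    2:{ unfold minus, plus, opp, scal; simpl. unfold mult; simpl. ring. }
    apply (@is_RInt_plus R_NormedModule); apply (@is_RInt_scal R_NormedModule); assumption.
Qed.

Lemma is_CRInt_const a b (c : C) : is_CRInt (fun _ => c) a b (RtoC (b - a) * c)%C.
Proof.
  unfold is_CRInt. 
  replace (RtoC (b - a) * c)%C with (@scal R_AbsRing C_R_NormedModule (b - a) c).
  - apply (@is_RInt_const C_R_NormedModule).
  - destruct c. unfold scal; simpl. unfold prod_scal; simpl. unfold scal; simpl; unfold mult; simpl.
    unfold Cmult, RtoC; simpl. f_equal; ring.
Qed.

Lemma is_CRInt_Chasles g a b c I J : is_CRInt g a b I -> is_CRInt g b c J -> is_CRInt g a c (I + J)%C.
Proof. intros H1 H2. apply (@is_RInt_Chasles C_R_NormedModule g a b c I J H1 H2). Qed.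

Lemma is_CRInt_point g a : is_CRInt g a a 0%C.
Proof. apply (@is_RInt_point C_R_NormedModule). Qed.

Lemma is_CRInt_swap g a b I : is_CRInt g a b I -> is_CRInt g b a (- I)%C.
Proof. intros H. apply (@is_RInt_swap C_R_NormedModule). exact H. Qed.

Lemma is_CRInt_bound g a b I M : a <= b -> (forall t, a <= t <= b -> Cmod (g t) <= M) ->
  is_CRInt g a b I -> Cmod I <= (b - a) * M.
Proof.
  intros Hab Hb H.
  rewrite <- prod_norm_Cmod.
  apply (@norm_RInt_le C_R_NormedModule g (fun _ => M) a b I).
  - exact Hab.
  - intros t Ht. rewrite prod_norm_Cmod. now apply Hb.
  - exact H.
  - replace ((b - a) * M) with (scal (b - a) M) by (unfold scal; simpl; unfold mult; simpl; ring).
    apply (@is_RInt_const R_NormedModule).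
Qed.

Lemma is_CRInt_FTC (P g : R -> C) a b :
  (forall t, Rmin a b <= t <= Rmax a b -> rdiff_eps P t (g t)) ->
  (forall t, Rmin a b <= t <= Rmax a b -> rcont g t) ->
  is_CRInt g a b (P b - P a)%C.
Proof.
  intros H1 H2. unfold is_CRInt.
  assert (E : (P b - P a)%C = @minus C_R_CompleteNormedModule (P b) (P a)) by reflexivity.
  rewrite E.
  apply (@is_RInt_derive C_R_CompleteNormedModule P g a b).
  - intros t Ht. apply rdiff_eps_is_derive. now apply H1.
  - intros t Ht. apply rcont_continuous. now apply H2.
Qed.

Lemma CRInt_Chasles g a b c : ex_CRInt g a b -> ex_CRInt g b c ->
  CRInt g a c = (CRInt g a b + CRInt g b c)%C.
Proof.
  intros H1 H2. apply (CRInt_unique g a c). apply (is_CRInt_Chasles g a b c); apply CRInt_correct; auto.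
Qed.

Lemma CRInt_minus g h a b : ex_CRInt g a b -> ex_CRInt h a b ->
  CRInt (fun t => g t - h t)%C a b = (CRInt g a b - CRInt h a b)%C.
Proof. intros H1 H2. apply CRInt_unique. apply is_CRInt_minus; apply CRInt_correct; auto. Qed.

Lemma CRInt_bound g a b M : a <= b -> ex_CRInt g a b -> (forall t, a <= t <= b -> Cmod (g t) <= M) ->
  Cmod (CRInt g a b) <= (b - a) * M.
Proof. intros Hab He Hb. eapply is_CRInt_bound; eauto. apply CRInt_correct; auto. Qed.

Lemma CRInt_point g a : CRInt g a a = 0%C.
Proof. apply CRInt_unique. apply is_CRInt_point. Qed.

Lemma CRInt_swap g a b : ex_CRInt g a b -> CRInt g b a = (- CRInt g a b)%C.
Proof. intros H. apply CRInt_unique. apply is_CRInt_swap. apply CRInt_correct. auto. Qed.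

Lemma CRInt_const (c : C) a b : CRInt (fun _ => c) a b = (RtoC (b - a) * c)%C.
Proof. apply CRInt_unique. apply is_CRInt_const. Qed.

Lemma ex_CRInt_swap g a b : ex_CRInt g a b -> ex_CRInt g b a.
Proof. intros [I HI]. exists (- I)%C. apply is_CRInt_swap. exact HI. Qed.

Lemma CRInt_bound_any g a b M : ex_CRInt g a b ->
  (forall t, Rmin a b <= t <= Rmax a b -> Cmod (g t) <= M) ->
  Cmod (CRInt g a b) <= Rabs (b - a) * M.
Proof.
  intros He Hb. destruct (Rle_dec a b) as [Hab|Hab].
  - rewrite Rabs_right by lra. apply CRInt_bound; auto. intros t Ht. apply Hb.
    rewrite Rmin_left, Rmax_right by lra. auto.
  - rewrite (CRInt_swap g b a) by (apply ex_CRInt_swap; auto). rewrite Cmod_opp.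
    rewrite Rabs_left by lra.
    replace (- (b - a)) with (a - b) by ring. apply CRInt_bound; try lra.
    + apply ex_CRInt_swap; auto.
    + intros t Ht. apply Hb. rewrite Rmin_right, Rmax_left by lra. auto.
Qed.

Lemma CRInt_minus_const_bound g (c : C) a b M : ex_CRInt g a b ->
  (forall t, Rmin a b <= t <= Rmax a b -> Cmod (g t - c) <= M) ->
  Cmod (CRInt g a b - RtoC (b - a) * c) <= Rabs (b - a) * M.
Proof.
  intros Hg HM.
  assert (Hc : ex_CRInt (fun _ => c) a b) by (exists (RtoC (b - a) * c)%C; apply is_CRInt_const).
  rewrite <- CRInt_const, <- CRInt_minus by auto.
  apply CRInt_bound_any; auto.
  exists (CRInt g a b - CRInt (fun _ => c) a b)%C. apply is_CRInt_minus; apply CRInt_correct; auto.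
Qed.

Lemma Cmod_sub_sym (a b : C) : Cmod (a - b) = Cmod (b - a).
Proof. replace (a - b)%C with (- (b - a))%C by ring. apply Cmod_opp. Qed.

Lemma ccont_const (c : C) z : ccont (fun _ => c) z.
Proof. intros e He. exists 1. split; [lra|]. intros w _. replace (c - c)%C with (RtoC 0) by ring.
  rewrite Cmod_0. lra. Qed.

Lemma ccont_id z : ccont (fun w => w) z.
Proof. intros e He. exists e. split; [lra|]. intros w H; exact H. Qed.

Lemma ccont_plus f g z : ccont f z -> ccont g z -> ccont (fun w => f w + g w)%C z.
Proof.
  intros Hf Hg e He. destruct (Hf (e/2)) as [d1 [Hd1 H1]]; [lra|].
  destruct (Hg (e/2)) as [d2 [Hd2 H2]]; [lra|].
  exists (Rmin d1 d2). split; [apply Rmin_pos; lra|]. intros w Hw.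
  assert (A1 := H1 w ltac:(pose proof (Rmin_l d1 d2); lra)).
  assert (A2 := H2 w ltac:(pose proof (Rmin_r d1 d2); lra)).
  replace (f w + g w - (f z + g z))%C with ((f w - f z) + (g w - g z))%C by ring.
  pose proof (Cmod_triangle (f w - f z) (g w - g z)). lra.
Qed.

Lemma ccont_opp f z : ccont f z -> ccont (fun w => - f w)%C z.
Proof.
  intros Hf e He. destruct (Hf e He) as [d [Hd H]]. exists d. split; auto.
  intros w Hw. replace (- f w - - f z)%C with (- (f w - f z))%C by ring. rewrite Cmod_opp. auto.
Qed.

Lemma ccont_mult f g z : ccont f z -> ccont g z -> ccont (fun w => f w * g w)%C z.
Proof.
  intros Hf Hg e He.
  set (A := Cmod (f z) + 1). set (B := Cmod (g z) + 1).
  assert (HA : 0 < A) by (unfold A; pose proof (Cmod_ge_0 (f z)); lra).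
  assert (HB : 0 < B) by (unfold B; pose proof (Cmod_ge_0 (g z)); lra).
  set (e1 := Rmin 1 (e / (2 * B))). set (e2 := e / (2 * (A + 1))).
  assert (He1 : 0 < e1) by (unfold e1; apply Rmin_pos; [lra| apply Rdiv_lt_0_compat; lra]).
  assert (He2 : 0 < e2) by (unfold e2; apply Rdiv_lt_0_compat; lra).
  destruct (Hf e1 He1) as [d1 [Hd1 H1]]. destruct (Hg e2 He2) as [d2 [Hd2 H2]].
  exists (Rmin d1 d2). split; [apply Rmin_pos; lra|]. intros w Hw.
  assert (A1 := H1 w ltac:(pose proof (Rmin_l d1 d2); lra)).
  assert (A2 := H2 w ltac:(pose proof (Rmin_r d1 d2); lra)).
  replace (f w * g w - f z * g z)%C with ((f w - f z) * g z + f w * (g w - g z))%C by ring.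
  eapply Rle_lt_trans. apply Cmod_triangle. rewrite !Cmod_mult.
  assert (E1 : e1 <= 1) by apply Rmin_l.
  assert (E2 : e1 <= e / (2 * B)) by apply Rmin_r.
  assert (Hfw : Cmod (f w) <= A + 1).
  { replace (f w) with (f z + (f w - f z))%C by ring. pose proof (Cmod_triangle (f z) (f w - f z)).
    unfold A; lra. }
  assert (X1 : Cmod (f w - f z) * Cmod (g z) <= e / 2).
  { 
    apply Rle_trans with (e1 * B).
    - apply Rmult_le_compat; try apply Cmod_ge_0; unfold B; lra.
    - apply Rle_trans with (e / (2 * B) * B). apply Rmult_le_compat_r; lra.
      right. field. lra. }
  assert (X2 : Cmod (f w) * Cmod (g w - g z) < e / 2).
  { apply Rle_lt_trans with ((A + 1) * Cmod (g w - g z)).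
    - apply Rmult_le_compat_r; [apply Cmod_ge_0| exact Hfw].
    - apply Rlt_le_trans with ((A + 1) * e2). apply Rmult_lt_compat_l; lra.
      unfold e2. right. field. lra. }
  lra.
Qed.

Lemma ccont_inv f z : ccont f z -> f z <> 0%C -> ccont (fun w => / f w)%C z.
Proof.
  intros Hf Hz e He.
  set (m := Cmod (f z)). assert (Hm : 0 < m) by (apply Cmod_gt_0; exact Hz).
  set (e1 := Rmin (m / 2) (e * m * m / 2)).
  assert (He1 : 0 < e1) by (unfold e1; apply Rmin_pos; [lra| ]; apply Rmult_lt_0_compat; [|lra];
    apply Rmult_lt_0_compat; [|lra]; apply Rmult_lt_0_compat; lra).
  destruct (Hf e1 He1) as [d [Hd H]]. exists d. split; auto. intros w Hw.
  specialize (H w Hw).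
  assert (Hfw : m / 2 <= Cmod (f w)).
  { assert (E1 : e1 <= m / 2) by apply Rmin_l.
    pose proof (Cmod_triangle (f w) (f z - f w)).
    replace (f w + (f z - f w))%C with (f z) in H0 by ring.
    rewrite Cmod_sub_sym in H0. unfold m in *. lra. }
  assert (Hw0 : f w <> 0%C). { intro E. rewrite E, Cmod_0 in Hfw. lra. }
  replace (/ f w - / f z)%C with (- (f w - f z) / (f w * f z))%C by (field; split; auto).
  rewrite Cmod_div by (apply Cmult_neq_0; auto). rewrite Cmod_opp, Cmod_mult.
  fold m. apply Rlt_le_trans with (e1 / (m / 2 * m)).
  - unfold Rdiv. apply Rle_lt_trans with (Cmod (f w - f z) * / (m / 2 * m)).
    + apply Rmult_le_compat_l. apply Cmod_ge_0. apply Rinv_le_contravar.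
      apply Rmult_lt_0_compat; lra. apply Rmult_le_compat_r; lra.
    + apply Rmult_lt_compat_r. apply Rinv_0_lt_compat. apply Rmult_lt_0_compat; lra. exact H.
  - assert (H0 : e1 <= e * m * m / 2) by apply Rmin_r.
    apply Rle_trans with ((e * m * m / 2) / (m / 2 * m)).
    + unfold Rdiv. apply Rmult_le_compat_r. apply Rlt_le, Rinv_0_lt_compat, Rmult_lt_0_compat; lra.
      exact H0.
    + right. field. lra.
Qed.

Lemma rcont_comp (q : C -> C) (g : R -> C) t : ccont q (g t) -> rcont g t -> rcont (fun u => q (g u)) t.
Proof.
  intros Hq Hg e He. destruct (Hq e He) as [d1 [Hd1 H1]]. destruct (Hg d1 Hd1) as [d2 [Hd2 H2]].
  exists d2. split; [exact Hd2|]. intros u Hu. apply H1. apply H2. exact Hu.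
Qed.

Lemma Cmod_Rdiff (u t : R) : Cmod ((u, 0) - (t, 0))%C = Rabs (u - t).
Proof. replace ((u, 0) - (t, 0))%C with (RtoC (u - t)). apply Cmod_R.
  unfold RtoC, Cminus, Cplus, Copp; simpl. f_equal; ring. Qed.

Lemma ccont_of_rcont f t : rcont f t -> ccont (fun z => f (fst z)) (t, 0).
Proof.
  intros Hf e He. destruct (Hf e He) as [d [Hd H]]. exists d; split; auto. intros w Hw.
  apply H. pose proof (Cmod_fst (w - (t,0))). simpl in H0. simpl. unfold Rminus. lra.
Qed.

Lemma rcont_of_ccont f t : ccont (fun z => f (fst z)) (t, 0) -> rcont f t.
Proof.
  intros Hf e He. destruct (Hf e He) as [d [Hd H]]. exists d; split; auto. intros u Hu.
  apply (H (u, 0)). rewrite Cmod_Rdiff. exact Hu.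
Qed.

Lemma rcont_mult f g t : rcont f t -> rcont g t -> rcont (fun u => f u * g u)%C t.
Proof.
  intros Hf Hg. apply rcont_of_ccont.
  apply (ccont_mult (fun z => f (fst z)) (fun z => g (fst z))); now apply ccont_of_rcont.
Qed.

Lemma rcont_plus f g t : rcont f t -> rcont g t -> rcont (fun u => f u + g u)%C t.
Proof.
  intros Hf Hg. apply rcont_of_ccont.
  apply (ccont_plus (fun z => f (fst z)) (fun z => g (fst z))); now apply ccont_of_rcont.
Qed.

Lemma rcont_const (c : C) t : rcont (fun _ => c) t.
Proof. apply rcont_of_ccont. apply ccont_const. Qed.

(** * Caratheodory differentiability *)

(* [f w - f z = phi w * (w - z)] near [z] with [phi] continuous at [z]: in this form the product,
   quotient and chain rules are algebraic identities. *)
Definition cdiff (f : C -> C) (z l : C) : Prop :=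
  exists phi d, 0 < d /\ ccont phi z /\ phi z = l /\
    forall w, Cmod (w - z) < d -> (f w - f z = phi w * (w - z))%C.

Definition rdiff (g : R -> C) (t : R) (l : C) : Prop :=
  exists psi d, 0 < d /\ rcont psi t /\ psi t = l /\
    forall u, Rabs (u - t) < d -> (g u - g t = psi u * RtoC (u - t))%C.

Lemma Cminus_neq_0 (a b : C) : a <> b -> (a - b)%C <> 0%C.
Proof. intros H E. apply H. apply Ceq_minus. exact E. Qed.

Lemma cdiff_eps_cdiff f z l : cdiff_eps f z l -> cdiff f z l.
Proof.
  intros H.
  exists (fun w => match Ceq_dec w z with left _ => l | right _ => ((f w - f z) / (w - z))%C end).
  exists 1. split; [lra|]. split; [|split].
  - intros e He. destruct (H (e / 2)) as [d [Hd Hd']]; [lra|]. exists d. split; auto.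
    intros w Hw. destruct (Ceq_dec w z) as [E|E]; destruct (Ceq_dec z z) as [_|NE]; try congruence.
    + subst. replace (l - l)%C with (RtoC 0) by ring. rewrite Cmod_0. lra.
    + specialize (Hd' w Hw). assert (Hwz := Cminus_neq_0 w z E).
      replace ((f w - f z) / (w - z) - l)%C with ((f w - f z - l * (w - z)) / (w - z))%C
        by (field; auto).
      rewrite Cmod_div by auto. pose proof (Cmod_gt_0 (w - z)) as [G _]. specialize (G Hwz).
      apply Rle_lt_trans with (e / 2). 2: lra.
      apply Rmult_le_reg_r with (Cmod (w - z)); auto. unfold Rdiv at 1.
      rewrite Rmult_assoc, Rinv_l by lra. lra.
  - destruct (Ceq_dec z z); congruence.
  - intros w _. destruct (Ceq_dec w z) as [E|E].
    + subst. ring.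
    + field. apply Cminus_neq_0; auto.
Qed.

Lemma cdiff_cdiff_eps f z l : cdiff f z l -> cdiff_eps f z l.
Proof.
  intros [phi [d [Hd [Hc [Hl Hf]]]]] e He.
  destruct (Hc e He) as [d2 [Hd2 H2]]. exists (Rmin d d2). split; [apply Rmin_pos; lra|].
  intros w Hw. rewrite Hf by (pose proof (Rmin_l d d2); lra).
  replace (phi w * (w - z) - l * (w - z))%C with ((phi w - phi z) * (w - z))%C by (rewrite Hl; ring).
  rewrite Cmod_mult. apply Rmult_le_compat_r. apply Cmod_ge_0. left. apply H2.
  pose proof (Rmin_r d d2); lra.
Qed.

Lemma cdiff_ccont f z l : cdiff f z l -> ccont f z.
Proof.
  intros [phi [d [Hd [Hc [Hl Hf]]]]] e He.
  destruct (Hc 1) as [d2 [Hd2 H2]]; [lra|].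
  set (B := Cmod (phi z) + 1).
  assert (HB : 0 < B) by (unfold B; pose proof (Cmod_ge_0 (phi z)); lra).
  exists (Rmin (Rmin d d2) (e / B)). split.
  { apply Rmin_pos; [apply Rmin_pos|apply Rdiv_lt_0_compat]; lra. }
  intros w Hw. pose proof (Rmin_l (Rmin d d2) (e / B)). pose proof (Rmin_r (Rmin d d2) (e / B)).
  pose proof (Rmin_l d d2). pose proof (Rmin_r d d2).
  rewrite Hf by lra. rewrite Cmod_mult.
  assert (Hp : Cmod (phi w) <= B).
  { replace (phi w) with (phi z + (phi w - phi z))%C by ring.
    pose proof (Cmod_triangle (phi z) (phi w - phi z)). specialize (H2 w ltac:(lra)). unfold B; lra. }
  apply Rle_lt_trans with (B * Cmod (w - z)).
  - apply Rmult_le_compat_r; auto. apply Cmod_ge_0.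
  - apply Rlt_le_trans with (B * (e / B)). apply Rmult_lt_compat_l; lra.
    right; field; lra.
Qed.

Lemma cdiff_const (c : C) z : cdiff (fun _ => c) z 0%C.
Proof.
  exists (fun _ => 0%C), 1. repeat split; try lra. apply ccont_const. intros; ring.
Qed.

Lemma cdiff_id z : cdiff (fun w => w) z 1%C.
Proof.
  exists (fun _ => 1%C), 1. repeat split; try lra. apply ccont_const. intros; ring.
Qed.

Lemma cdiff_plus f g z l1 l2 : cdiff f z l1 -> cdiff g z l2 ->
  cdiff (fun w => f w + g w)%C z (l1 + l2)%C.
Proof.
  intros [p1 [d1 [Hd1 [Hc1 [Hl1 H1]]]]] [p2 [d2 [Hd2 [Hc2 [Hl2 H2]]]]].
  exists (fun w => p1 w + p2 w)%C, (Rmin d1 d2). split; [apply Rmin_pos; lra|].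
  split; [apply ccont_plus; auto|]. split; [rewrite Hl1, Hl2; auto|].
  intros w Hw. pose proof (Rmin_l d1 d2). pose proof (Rmin_r d1 d2).
  replace (f w + g w - (f z + g z))%C with ((f w - f z) + (g w - g z))%C by ring.
  rewrite H1, H2 by lra. ring.
Qed.

Lemma cdiff_mult f g z l1 l2 : cdiff f z l1 -> cdiff g z l2 ->
  cdiff (fun w => f w * g w)%C z (l1 * g z + f z * l2)%C.
Proof.
  intros Hf Hg. assert (Cg := cdiff_ccont _ _ _ Hg).
  destruct Hf as [p1 [d1 [Hd1 [Hc1 [Hl1 H1]]]]]. destruct Hg as [p2 [d2 [Hd2 [Hc2 [Hl2 H2]]]]].
  exists (fun w => p1 w * g w + f z * p2 w)%C, (Rmin d1 d2). split; [apply Rmin_pos; lra|].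
  split. { apply ccont_plus. apply ccont_mult; auto. apply ccont_mult; auto. apply ccont_const. }
  split; [rewrite Hl1, Hl2; auto|].
  intros w Hw. pose proof (Rmin_l d1 d2). pose proof (Rmin_r d1 d2).
  replace (f w * g w - f z * g z)%C with ((f w - f z) * g w + f z * (g w - g z))%C by ring.
  rewrite H1, H2 by lra. ring.
Qed.

Lemma cdiff_inv f z l : cdiff f z l -> f z <> 0%C -> cdiff (fun w => / f w)%C z (- l / (f z * f z))%C.
Proof.
  intros Hf Hz. assert (Cf := cdiff_ccont _ _ _ Hf).
  destruct Hf as [p1 [d1 [Hd1 [Hc1 [Hl1 H1]]]]].
  set (m := Cmod (f z)). assert (Hm : 0 < m) by (apply Cmod_gt_0; exact Hz).
  destruct (Cf m Hm) as [d2 [Hd2 H2]].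
  assert (NZ : forall w, Cmod (w - z) < d2 -> f w <> 0%C).
  { intros w Hw E. specialize (H2 w Hw). rewrite E in H2.
    replace (0 - f z)%C with (- f z)%C in H2 by ring. rewrite Cmod_opp in H2. unfold m in H2. lra. }
  exists (fun w => - p1 w / (f w * f z))%C, (Rmin d1 d2). split; [apply Rmin_pos; lra|].
  split.
  { unfold Cdiv. apply ccont_mult. apply ccont_opp; auto. apply ccont_inv.
    apply ccont_mult; auto. apply ccont_const. apply Cmult_neq_0; auto. }
  split; [rewrite Hl1; auto|].
  intros w Hw. pose proof (Rmin_l d1 d2). pose proof (Rmin_r d1 d2).
  assert (Hw0 : f w <> 0%C) by (apply NZ; lra).
  replace (/ f w - / f z)%C with (- (f w - f z) / (f w * f z))%C by (field; auto).
  rewrite H1 by lra. field. auto.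
Qed.

Lemma cdiff_ext f g z l d : 0 < d -> (forall w, Cmod (w - z) < d -> f w = g w) -> cdiff f z l ->
  cdiff g z l.
Proof.
  intros Hd E [p1 [d1 [Hd1 [Hc1 [Hl1 H1]]]]].
  exists p1, (Rmin d d1). split; [apply Rmin_pos; lra|]. split; auto. split; auto.
  intros w Hw. pose proof (Rmin_l d d1). pose proof (Rmin_r d d1).
  rewrite <- (E w) by lra. rewrite <- (E z).
  apply H1. lra. replace (z - z)%C with (RtoC 0) by ring. rewrite Cmod_0. lra.
Qed.

Lemma rdiff_rcont g t l : rdiff g t l -> rcont g t.
Proof.
  intros [phi [d [Hd [Hc [Hl Hf]]]]] e He.
  destruct (Hc 1) as [d2 [Hd2 H2]]; [lra|].
  set (B := Cmod (phi t) + 1).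
  assert (HB : 0 < B) by (unfold B; pose proof (Cmod_ge_0 (phi t)); lra).
  exists (Rmin (Rmin d d2) (e / B)). split.
  { apply Rmin_pos; [apply Rmin_pos|apply Rdiv_lt_0_compat]; lra. }
  intros w Hw. pose proof (Rmin_l (Rmin d d2) (e / B)). pose proof (Rmin_r (Rmin d d2) (e / B)).
  pose proof (Rmin_l d d2). pose proof (Rmin_r d d2).
  rewrite Hf by lra. rewrite Cmod_mult, Cmod_R.
  assert (Hp : Cmod (phi w) <= B).
  { replace (phi w) with (phi t + (phi w - phi t))%C by ring.
    pose proof (Cmod_triangle (phi t) (phi w - phi t)). specialize (H2 w ltac:(lra)). unfold B; lra. }
  apply Rle_lt_trans with (B * Rabs (w - t)).
  - apply Rmult_le_compat_r; auto. apply Rabs_pos.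
  - apply Rlt_le_trans with (B * (e / B)). apply Rmult_lt_compat_l; lra.
    right; field; lra.
Qed.

Lemma rdiff_rdiff_eps g t l : rdiff g t l -> rdiff_eps g t l.
Proof.
  intros [phi [d [Hd [Hc [Hl Hf]]]]] e He.
  destruct (Hc e He) as [d2 [Hd2 H2]]. exists (Rmin d d2). split; [apply Rmin_pos; lra|].
  intros w Hw. rewrite Hf by (pose proof (Rmin_l d d2); lra).
  replace (phi w * RtoC (w - t) - RtoC (w - t) * l)%C with ((phi w - phi t) * RtoC (w - t))%C
    by (rewrite Hl; ring).
  rewrite Cmod_mult, Cmod_R. apply Rmult_le_compat_r. apply Rabs_pos. left. apply H2.
  pose proof (Rmin_r d d2); lra.
Qed.

Lemma rdiff_eps_rdiff g t l : rdiff_eps g t l -> rdiff g t l.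
Proof.
  intros H.
  exists (fun u => match Req_EM_T u t with left _ => l | right _ => ((g u - g t) / RtoC (u - t))%C end).
  exists 1. split; [lra|]. split; [|split].
  - intros e He. destruct (H (e / 2)) as [d [Hd Hd']]; [lra|]. exists d. split; auto.
    intros w Hw. destruct (Req_EM_T w t) as [E|E]; destruct (Req_EM_T t t) as [_|NE]; try congruence.
    + subst. replace (l - l)%C with (RtoC 0) by ring. rewrite Cmod_0. lra.
    + specialize (Hd' w Hw). assert (Hwz : RtoC (w - t) <> 0%C).
      { intro X. apply RtoC_inj in X. apply E. lra. }
      replace ((g w - g t) / RtoC (w - t) - l)%C
        with ((g w - g t - RtoC (w - t) * l) / RtoC (w - t))%C by (field; auto).
      rewrite Cmod_div by auto. rewrite Cmod_R. assert (0 < Rabs (w - t)) by (apply Rabs_pos_lt; lra).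
      apply Rle_lt_trans with (e / 2). 2: lra.
      apply Rmult_le_reg_r with (Rabs (w - t)); auto. unfold Rdiv at 1.
      rewrite Rmult_assoc, Rinv_l by lra. lra.
  - destruct (Req_EM_T t t); congruence.
  - intros w _. destruct (Req_EM_T w t) as [E|E].
    + subst. replace (t - t) with 0 by ring. ring.
    + field. intro X. apply RtoC_inj in X. apply E. lra.
Qed.

Lemma cdiff_comp_path (P : C -> C) (g : R -> C) t l1 l2 :
  cdiff P (g t) l1 -> rdiff g t l2 -> rdiff (fun u => P (g u)) t (l1 * l2)%C.
Proof.
  intros HP Hg. assert (Cg := rdiff_rcont _ _ _ Hg).
  destruct HP as [p1 [d1 [Hd1 [Hc1 [Hl1 H1]]]]]. destruct Hg as [p2 [d2 [Hd2 [Hc2 [Hl2 H2]]]]].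
  destruct (Cg d1 Hd1) as [d3 [Hd3 H3]].
  exists (fun u => p1 (g u) * p2 u)%C, (Rmin d2 d3). split; [apply Rmin_pos; lra|].
  split. { apply rcont_mult; auto. apply rcont_comp; auto. }
  split; [rewrite Hl1, Hl2; auto|].
  intros u Hu. pose proof (Rmin_l d2 d3). pose proof (Rmin_r d2 d3).
  rewrite H1 by (apply H3; lra). rewrite H2 by lra. ring.
Qed.

Lemma rdiff_hline (y t : R) : rdiff (fun u => (u, y) : C) t 1%C.
Proof.
  exists (fun _ => 1%C), 1. split; [lra|]. split; [apply rcont_const|]. split; auto.
  intros u _. unfold RtoC, Cminus, Cplus, Copp, Cmult; simpl. f_equal; ring.
Qed.

Lemma rdiff_vline (x t : R) : rdiff (fun u => (x, u) : C) t Ci.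
Proof.
  exists (fun _ => Ci), 1. split; [lra|]. split; [apply rcont_const|]. split; auto.
  intros u _. unfold RtoC, Ci, Cminus, Cplus, Copp, Cmult; simpl. f_equal; ring.
Qed.

Lemma rdiff_eps_RtoC (f : R -> R) t l : derivable_pt_lim f t l ->
  rdiff_eps (fun u => RtoC (f u)) t (RtoC l).
Proof.
  intros H e He. destruct (H e He) as [d Hd]. exists d. split; [apply cond_pos|].
  intros u Hu. destruct (Req_EM_T u t) as [E|E].
  - subst. replace (RtoC (f t) - RtoC (f t) - RtoC (t - t) * RtoC l)%C with (RtoC 0)
      by (unfold RtoC, Cminus, Cplus, Copp, Cmult; simpl; f_equal; ring).
    rewrite Cmod_0. replace (t - t) with 0 by ring. rewrite Rabs_R0. lra.
  - specialize (Hd (u - t) ltac:(lra) Hu). replace (t + (u - t)) with u in Hd by ring.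
    replace (RtoC (f u) - RtoC (f t) - RtoC (u - t) * RtoC l)%C with (RtoC (f u - f t - (u - t) * l))
      by (unfold RtoC, Cminus, Cplus, Copp, Cmult; simpl; f_equal; ring).
    rewrite Cmod_R.
    replace (f u - f t - (u - t) * l) with (((f u - f t) / (u - t) - l) * (u - t)) by (field; lra).
    rewrite Rabs_mult. apply Rmult_le_compat_r. apply Rabs_pos. lra.
Qed.

Lemma rdiff_scal g t l (c : C) : rdiff g t l -> rdiff (fun u => c * g u)%C t (c * l)%C.
Proof.
  intros [p [d [Hd [Hc [Hl H]]]]]. exists (fun u => c * p u)%C, d. split; auto. split.
  - apply rcont_mult; auto. apply rcont_const.
  - split. rewrite Hl; auto. intros u Hu. rewrite <- Cmult_assoc, <- H by auto. ring.
Qed.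

Lemma rdiff_plus g h t l1 l2 : rdiff g t l1 -> rdiff h t l2 ->
  rdiff (fun u => g u + h u)%C t (l1 + l2)%C.
Proof.
  intros [p1 [d1 [Hd1 [Hc1 [Hl1 H1]]]]] [p2 [d2 [Hd2 [Hc2 [Hl2 H2]]]]].
  exists (fun u => p1 u + p2 u)%C, (Rmin d1 d2). split; [apply Rmin_pos; lra|].
  split; [apply rcont_plus; auto|]. split; [rewrite Hl1, Hl2; auto|].
  intros w Hw. pose proof (Rmin_l d1 d2). pose proof (Rmin_r d1 d2).
  replace (g w + h w - (g t + h t))%C with ((g w - g t) + (h w - h t))%C by ring.
  rewrite H1, H2 by lra. ring.
Qed.

Lemma rdiff_const (c : C) t : rdiff (fun _ => c) t 0%C.
Proof. exists (fun _ => 0%C), 1. split; [lra|]. split; [apply rcont_const|]. split; auto.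
intros; ring. Qed.

Definition circle (p : C) (r t : R) : C := (p + RtoC r * (cos t, sin t))%C.

Lemma rdiff_circle p r t : rdiff (circle p r) t (Ci * RtoC r * (cos t, sin t))%C.
Proof.
  unfold circle.
  replace (Ci * RtoC r * (cos t, sin t))%C with (0 + RtoC r * (RtoC (- sin t) + Ci * RtoC (cos t)))%C
    by (unfold Ci, RtoC, Cplus, Cmult; simpl; f_equal; ring).
  apply rdiff_plus. apply rdiff_const. apply rdiff_scal.
  apply rdiff_eps_rdiff.
  assert (E : forall u, (cos u, sin u) = (RtoC (cos u) + Ci * RtoC (sin u))%C)
    by (intro u; unfold Ci, RtoC, Cplus, Cmult; simpl; f_equal; ring).
  intros e He.
  destruct (rdiff_eps_RtoC cos t (- sin t) (derivable_pt_lim_cos t) (e/2)) as [d1 [Hd1 H1]]; [lra|].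
  destruct (rdiff_eps_RtoC sin t (cos t) (derivable_pt_lim_sin t) (e/2)) as [d2 [Hd2 H2]]; [lra|].
  exists (Rmin d1 d2). split; [apply Rmin_pos; lra|]. intros u Hu.
  pose proof (Rmin_l d1 d2). pose proof (Rmin_r d1 d2).
  specialize (H1 u ltac:(lra)). specialize (H2 u ltac:(lra)).
  rewrite !E.
  replace (RtoC (cos u) + Ci * RtoC (sin u) - (RtoC (cos t) + Ci * RtoC (sin t)) -
    RtoC (u - t) * (RtoC (- sin t) + Ci * RtoC (cos t)))%C with
    ((RtoC (cos u) - RtoC (cos t) - RtoC (u - t) * RtoC (- sin t)) +
     Ci * (RtoC (sin u) - RtoC (sin t) - RtoC (u - t) * RtoC (cos t)))%C by ring.
  eapply Rle_trans. apply Cmod_triangle. rewrite Cmod_mult.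
  replace (Cmod Ci) with 1. lra.
  unfold Cmod, Ci; simpl. replace (0 * (0 * 1) + 1 * (1 * 1)) with 1 by ring. now rewrite sqrt_1.
Qed.

Definition Ccont (q : C -> C) : Prop := forall z, ccont q z.

Definition hline_int (q : C -> C) (y a b : R) : C := CRInt (fun t => q (t, y)) a b.
Definition vline_int (q : C -> C) (x a b : R) : C := CRInt (fun s => q (x, s)) a b.
Definition rect_int (q : C -> C) (x1 x2 y1 y2 : R) : C :=
  (hline_int q y1 x1 x2 + Ci * vline_int q x2 y1 y2 - hline_int q y2 x1 x2 - Ci * vline_int q x1 y1 y2)%C.

Lemma hline_rcont q y t : Ccont q -> rcont (fun u => q (u, y)) t.
Proof. intros H. apply rcont_comp. apply H. eapply rdiff_rcont. apply rdiff_hline. Qed.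

Lemma vline_rcont q x t : Ccont q -> rcont (fun u => q (x, u)) t.
Proof. intros H. apply rcont_comp. apply H. eapply rdiff_rcont. apply rdiff_vline. Qed.

Lemma ex_hline_int q y a b : Ccont q -> ex_CRInt (fun t => q (t, y)) a b.
Proof. intros H. apply ex_CRInt_cont. intros; now apply hline_rcont. Qed.

Lemma ex_vline_int q x a b : Ccont q -> ex_CRInt (fun t => q (x, t)) a b.
Proof. intros H. apply ex_CRInt_cont. intros; now apply vline_rcont. Qed.

Lemma rect_int_split_x q x1 m x2 y1 y2 : Ccont q ->
  rect_int q x1 x2 y1 y2 = (rect_int q x1 m y1 y2 + rect_int q m x2 y1 y2)%C.
Proof.
  intros H. unfold rect_int, hline_int.
  rewrite (CRInt_Chasles _ x1 m x2) by (apply ex_hline_int; auto).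
  rewrite (CRInt_Chasles (fun t => q (t, y2)) x1 m x2) by (apply ex_hline_int; auto).
  ring.
Qed.

Lemma rect_int_split_y q x1 x2 y1 m y2 : Ccont q ->
  rect_int q x1 x2 y1 y2 = (rect_int q x1 x2 y1 m + rect_int q x1 x2 m y2)%C.
Proof.
  intros H. unfold rect_int, vline_int.
  rewrite (CRInt_Chasles _ y1 m y2) by (apply ex_vline_int; auto).
  rewrite (CRInt_Chasles (fun t => q (x1, t)) y1 m y2) by (apply ex_vline_int; auto).
  ring.
Qed.

Lemma Ccont_minus q h : Ccont q -> Ccont h -> Ccont (fun z => q z - h z)%C.
Proof. intros H1 H2 z. unfold Cminus. apply ccont_plus; auto. apply ccont_opp; auto. Qed.

Lemma rect_int_minus q h x1 x2 y1 y2 : Ccont q -> Ccont h ->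
  rect_int (fun z => q z - h z)%C x1 x2 y1 y2 = (rect_int q x1 x2 y1 y2 - rect_int h x1 x2 y1 y2)%C.
Proof.
  intros H1 H2. unfold rect_int, hline_int, vline_int.
  rewrite (CRInt_minus (fun t => q (t, y1)) (fun t => h (t, y1))) by (apply ex_hline_int; auto).
  rewrite (CRInt_minus (fun t => q (t, y2)) (fun t => h (t, y2))) by (apply ex_hline_int; auto).
  rewrite (CRInt_minus (fun t => q (x1, t)) (fun t => h (x1, t))) by (apply ex_vline_int; auto).
  rewrite (CRInt_minus (fun t => q (x2, t)) (fun t => h (x2, t))) by (apply ex_vline_int; auto).
  ring.
Qed.

Lemma rect_int_bound q x1 x2 y1 y2 M : Ccont q -> x1 <= x2 -> y1 <= y2 ->
  (forall z, x1 <= fst z <= x2 -> y1 <= snd z <= y2 -> Cmod (q z) <= M) ->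
  Cmod (rect_int q x1 x2 y1 y2) <= 2 * ((x2 - x1) + (y2 - y1)) * M.
Proof.
  intros Hq Hx Hy HM. unfold rect_int.
  assert (A1 : Cmod (hline_int q y1 x1 x2) <= (x2 - x1) * M).
  { apply CRInt_bound; auto. apply ex_hline_int; auto. intros t Ht. apply HM; simpl; lra. }
  assert (A2 : Cmod (hline_int q y2 x1 x2) <= (x2 - x1) * M).
  { apply CRInt_bound; auto. apply ex_hline_int; auto. intros t Ht. apply HM; simpl; lra. }
  assert (A3 : Cmod (vline_int q x1 y1 y2) <= (y2 - y1) * M).
  { apply CRInt_bound; auto. apply ex_vline_int; auto. intros t Ht. apply HM; simpl; lra. }
  assert (A4 : Cmod (vline_int q x2 y1 y2) <= (y2 - y1) * M).
  { apply CRInt_bound; auto. apply ex_vline_int; auto. intros t Ht. apply HM; simpl; lra. }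
  unfold Cminus.
  eapply Rle_trans. apply Cmod_triangle. rewrite Cmod_opp, Cmod_mult, Cmod_Ci.
  eapply Rle_trans. apply Rplus_le_compat_r. apply Cmod_triangle. rewrite Cmod_opp.
  eapply Rle_trans. apply Rplus_le_compat_r. apply Rplus_le_compat_r. apply Cmod_triangle.
  rewrite Cmod_mult, Cmod_Ci. lra.
Qed.

Lemma hline_int_FTC P q y a b : Ccont q -> (forall z, cdiff P z (q z)) ->
  hline_int q y a b = (P (b, y) - P (a, y))%C.
Proof.
  intros Hq HP. unfold hline_int. apply CRInt_unique.
  apply (is_CRInt_FTC (fun t => P (t, y))).
  - intros t _. apply rdiff_rdiff_eps. replace (q (t, y)) with (q (t, y) * 1)%C by ring.
    apply cdiff_comp_path. apply HP. apply rdiff_hline.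
  - intros; apply hline_rcont; auto.
Qed.

Lemma vline_int_FTC P q x a b : Ccont q -> (forall z, cdiff P z (q z)) ->
  (Ci * vline_int q x a b = P (x, b) - P (x, a))%C.
Proof.
  intros Hq HP. unfold vline_int. symmetry.
  assert (H : is_CRInt (fun t => q (x, t) * Ci)%C a b (P (x, b) - P (x, a))%C).
  { apply (is_CRInt_FTC (fun t => P (x, t))).
    - intros t _. apply rdiff_rdiff_eps. apply cdiff_comp_path. apply HP. apply rdiff_vline.
    - intros; apply rcont_mult. apply vline_rcont; auto. apply rcont_const. }
  assert (H2 : is_CRInt (fun t => Ci * q (x, t))%C a b (Ci * CRInt (fun s => q (x, s)) a b)%C).
  { apply is_CRInt_scal. apply CRInt_correct. apply ex_vline_int; auto. }
  apply is_CRInt_ext with (h := fun t => (q (x, t) * Ci)%C) in H2.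
  2: { intros; ring. }
  apply CRInt_unique in H. apply CRInt_unique in H2. congruence.
Qed.

Lemma rect_int_primitive P q x1 x2 y1 y2 : Ccont q -> (forall z, cdiff P z (q z)) ->
  rect_int q x1 x2 y1 y2 = 0%C.
Proof.
  intros Hq HP. unfold rect_int.
  rewrite (hline_int_FTC P q y1), (hline_int_FTC P q y2), (vline_int_FTC P q x1), (vline_int_FTC P q x2) by auto. ring.
Qed.

(** * Goursat's lemma *)

Record rect := mk_rect { rx1 : R; rx2 : R; ry1 : R; ry2 : R }.
Definition rect_int_of q r := rect_int q (rx1 r) (rx2 r) (ry1 r) (ry2 r).
Definition rect_midx r := (rx1 r + rx2 r) / 2.
Definition rect_midy r := (ry1 r + ry2 r) / 2.
Definition quarter1 r := mk_rect (rx1 r) (rect_midx r) (ry1 r) (rect_midy r).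
Definition quarter2 r := mk_rect (rect_midx r) (rx2 r) (ry1 r) (rect_midy r).
Definition quarter3 r := mk_rect (rx1 r) (rect_midx r) (rect_midy r) (ry2 r).
Definition quarter4 r := mk_rect (rect_midx r) (rx2 r) (rect_midy r) (ry2 r).

Lemma rect_int_quarters q r : Ccont q ->
  rect_int_of q r = (rect_int_of q (quarter1 r) + rect_int_of q (quarter2 r) + rect_int_of q (quarter3 r) + rect_int_of q (quarter4 r))%C.
Proof.
  intros Hq. unfold rect_int_of, quarter1, quarter2, quarter3, quarter4; simpl.
  rewrite (rect_int_split_x q (rx1 r) (rect_midx r) (rx2 r)) by auto.
  rewrite (rect_int_split_y q (rx1 r) (rect_midx r) (ry1 r) (rect_midy r) (ry2 r)) by auto.
  rewrite (rect_int_split_y q (rect_midx r) (rx2 r) (ry1 r) (rect_midy r) (ry2 r)) by auto.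
  ring.
Qed.

Definition bisect q r :=
  if Rle_dec (Cmod (rect_int_of q r) / 4) (Cmod (rect_int_of q (quarter1 r))) then quarter1 r else
  if Rle_dec (Cmod (rect_int_of q r) / 4) (Cmod (rect_int_of q (quarter2 r))) then quarter2 r else
  if Rle_dec (Cmod (rect_int_of q r) / 4) (Cmod (rect_int_of q (quarter3 r))) then quarter3 r else quarter4 r.

Definition half_subrect (r s : rect) : Prop :=
  rx1 r <= rx1 s /\ rx2 s <= rx2 r /\ ry1 r <= ry1 s /\ ry2 s <= ry2 r /\
  rx2 s - rx1 s = (rx2 r - rx1 r) / 2 /\ ry2 s - ry1 s = (ry2 r - ry1 r) / 2.

Lemma bisect_spec q r : Ccont q -> rx1 r <= rx2 r -> ry1 r <= ry2 r ->
  Cmod (rect_int_of q r) / 4 <= Cmod (rect_int_of q (bisect q r)) /\ half_subrect r (bisect q r).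
Proof.
  intros Hq Hx Hy. unfold bisect.
  assert (G1 : half_subrect r (quarter1 r))
    by (unfold half_subrect, quarter1, rect_midx, rect_midy; simpl; lra).
  assert (G2 : half_subrect r (quarter2 r))
    by (unfold half_subrect, quarter2, rect_midx, rect_midy; simpl; lra).
  assert (G3 : half_subrect r (quarter3 r))
    by (unfold half_subrect, quarter3, rect_midx, rect_midy; simpl; lra).
  assert (G4 : half_subrect r (quarter4 r))
    by (unfold half_subrect, quarter4, rect_midx, rect_midy; simpl; lra).
  destruct (Rle_dec _ _); [split; auto|].
  destruct (Rle_dec _ _); [split; auto|].
  destruct (Rle_dec _ _); [split; auto|].
  split; auto.
  rewrite (rect_int_quarters q r Hq) in n, n0, n1 |- *.
  pose proof (Cmod_triangle (rect_int_of q (quarter1 r) + rect_int_of q (quarter2 r) + rect_int_of q (quarter3 r)) (rect_int_of q (quarter4 r))).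
  pose proof (Cmod_triangle (rect_int_of q (quarter1 r) + rect_int_of q (quarter2 r)) (rect_int_of q (quarter3 r))).
  pose proof (Cmod_triangle (rect_int_of q (quarter1 r)) (rect_int_of q (quarter2 r))).
  lra.
Qed.

Fixpoint bisect_seq q r0 (n : nat) : rect :=
  match n with O => r0 | S k => bisect q (bisect_seq q r0 k) end.

Section BisectSeq.
Variable q : C -> C.
Variable r0 : rect.
Hypothesis Hq : Ccont q.
Hypothesis Hx0 : rx1 r0 <= rx2 r0.
Hypothesis Hy0 : ry1 r0 <= ry2 r0.

Let width0 := rx2 r0 - rx1 r0.
Let height0 := ry2 r0 - ry1 r0.

Lemma bisect_seq_spec n :
  rx2 (bisect_seq q r0 n) - rx1 (bisect_seq q r0 n) = width0 / 2 ^ n /\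
  ry2 (bisect_seq q r0 n) - ry1 (bisect_seq q r0 n) = height0 / 2 ^ n /\
  Cmod (rect_int_of q r0) <= 4 ^ n * Cmod (rect_int_of q (bisect_seq q r0 n)).
Proof.
  induction n as [|n IH].
  - simpl. unfold width0, height0. repeat split; try field. lra.
  - destruct IH as [A [B Cc]].
    assert (P2 : 0 < 2 ^ n) by (apply pow_lt; lra).
    assert (Hw : rx1 (bisect_seq q r0 n) <= rx2 (bisect_seq q r0 n)).
    { assert (0 <= width0 / 2 ^ n) by (apply Rdiv_le_0_compat; unfold width0; lra). lra. }
    assert (Hh : ry1 (bisect_seq q r0 n) <= ry2 (bisect_seq q r0 n)).
    { assert (0 <= height0 / 2 ^ n) by (apply Rdiv_le_0_compat; unfold height0; lra). lra. }
    destruct (bisect_spec q (bisect_seq q r0 n) Hq Hw Hh) as [S1 [_ [_ [_ [_ [S2 S3]]]]]].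
    simpl. repeat split.
    + rewrite S2, A. field. lra.
    + rewrite S3, B. field. lra.
    + assert (0 < 4 ^ n) by (apply pow_lt; lra).
      apply Rle_trans with (4 ^ n * (4 * (Cmod (rect_int_of q (bisect q (bisect_seq q r0 n)))))).
      * apply Rle_trans with (4 ^ n * Cmod (rect_int_of q (bisect_seq q r0 n))); auto.
        apply Rmult_le_compat_l; lra.
      * right. ring.
Qed.

Lemma bisect_seq_ordered n : rx1 (bisect_seq q r0 n) <= rx2 (bisect_seq q r0 n) /\ ry1 (bisect_seq q r0 n) <= ry2 (bisect_seq q r0 n).
Proof.
  destruct (bisect_seq_spec n) as [A [B _]].
  assert (P2 : 0 < 2 ^ n) by (apply pow_lt; lra).
  assert (0 <= width0 / 2 ^ n) by (apply Rdiv_le_0_compat; unfold width0; lra).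
  assert (0 <= height0 / 2 ^ n) by (apply Rdiv_le_0_compat; unfold height0; lra). lra.
Qed.

Lemma bisect_seq_half n : half_subrect (bisect_seq q r0 n) (bisect_seq q r0 (S n)).
Proof.
  destruct (bisect_seq_ordered n) as [Hw Hh].
  apply (bisect_spec q (bisect_seq q r0 n) Hq Hw Hh).
Qed.

Lemma bisect_seq_nested n m : (n <= m)%nat ->
  rx1 (bisect_seq q r0 n) <= rx1 (bisect_seq q r0 m) /\ rx2 (bisect_seq q r0 m) <= rx2 (bisect_seq q r0 n) /\
  ry1 (bisect_seq q r0 n) <= ry1 (bisect_seq q r0 m) /\ ry2 (bisect_seq q r0 m) <= ry2 (bisect_seq q r0 n).
Proof.
  induction 1.
  - lra.
  - destruct (bisect_seq_half m) as [A [B [Cc [D _]]]]. lra.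
Qed.

Lemma bisect_seq_cross n m : rx1 (bisect_seq q r0 n) <= rx2 (bisect_seq q r0 m) /\ ry1 (bisect_seq q r0 n) <= ry2 (bisect_seq q r0 m).
Proof.
  destruct (bisect_seq_nested n (max n m)) as [A [_ [Cc _]]]. apply Nat.le_max_l.
  destruct (bisect_seq_nested m (max n m)) as [_ [B [_ D]]]. apply Nat.le_max_r.
  destruct (bisect_seq_ordered (max n m)). lra.
Qed.

Lemma bisect_seq_common_point : exists X Y, forall n,
  rx1 (bisect_seq q r0 n) <= X <= rx2 (bisect_seq q r0 n) /\ ry1 (bisect_seq q r0 n) <= Y <= ry2 (bisect_seq q r0 n).
Proof.
  destruct (completeness (fun x => exists n, x = rx1 (bisect_seq q r0 n))) as [X [HX1 HX2]].
  { exists (rx2 (bisect_seq q r0 0)). intros x [n ->]. apply (bisect_seq_cross n 0). }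
  { exists (rx1 (bisect_seq q r0 0)). exists 0%nat. auto. }
  destruct (completeness (fun x => exists n, x = ry1 (bisect_seq q r0 n))) as [Y [HY1 HY2]].
  { exists (ry2 (bisect_seq q r0 0)). intros x [n ->]. apply (bisect_seq_cross n 0). }
  { exists (ry1 (bisect_seq q r0 0)). exists 0%nat. auto. }
  exists X, Y. intros n. split; split.
  - apply HX1. exists n; auto.
  - apply HX2. intros x [m ->]. apply (bisect_seq_cross m n).
  - apply HY1. exists n; auto.
  - apply HY2. intros x [m ->]. apply (bisect_seq_cross m n).
Qed.

End BisectSeq.

Lemma cdiff_eq f z l l' : cdiff f z l -> l = l' -> cdiff f z l'.
Proof. intros H E; subst; auto. Qed.

Lemma cdiff_affine_primitive (c l z0 : C) z :
  cdiff (fun w => c * w + l / 2 * ((w - z0) * (w - z0)))%C z (c + l * (z - z0))%C.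
Proof.
  eapply cdiff_eq.
  - apply cdiff_plus.
    + apply (cdiff_mult (fun _ => c) (fun w => w)). apply cdiff_const. apply cdiff_id.
    + apply (cdiff_mult (fun _ => l / 2)%C (fun w => (w - z0) * (w - z0))%C). apply cdiff_const.
      apply (cdiff_mult (fun w => w - z0)%C (fun w => w - z0)%C);
        (apply (cdiff_plus (fun w => w) (fun _ => - z0)%C); [apply cdiff_id | apply cdiff_const]).
  - simpl. field.
Qed.

Lemma Ccont_affine (c l z0 : C) : Ccont (fun w => c + l * (w - z0))%C.
Proof.
  intro z. apply ccont_plus. apply ccont_const. apply ccont_mult. apply ccont_const.
  apply (ccont_plus (fun w => w) (fun _ => - z0)%C). apply ccont_id. apply ccont_const.
Qed.

Lemma pow4_sqr n : 4 ^ n = 2 ^ n * 2 ^ n.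
Proof. rewrite <- Rpow_mult_distr. replace (2 * 2) with 4 by ring. reflexivity. Qed.

Lemma rect_int_near_point q z l eps d x1 x2 y1 y2 : Ccont q -> 0 <= eps ->
  (forall w, Cmod (w - z) < d -> Cmod (q w - q z - l * (w - z)) <= eps * Cmod (w - z)) ->
  x1 <= fst z <= x2 -> y1 <= snd z <= y2 -> (x2 - x1) + (y2 - y1) < d ->
  Cmod (rect_int q x1 x2 y1 y2) <= 2 * ((x2 - x1) + (y2 - y1)) ^ 2 * eps.
Proof.
  intros Hq Heps Hl Hzx Hzy HD.
  set (D := (x2 - x1) + (y2 - y1)) in *.
  set (L := fun w => (q z + l * (w - z))%C).
  (* the affine part [L] has a primitive, so it does not contribute *)
  assert (E : rect_int q x1 x2 y1 y2 = rect_int (fun w => q w - L w)%C x1 x2 y1 y2).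
  { rewrite rect_int_minus by (auto; apply Ccont_affine).
    rewrite (rect_int_primitive (fun w => q z * w + l / 2 * ((w - z) * (w - z)))%C L)
      by (try apply Ccont_affine; intro w; apply cdiff_affine_primitive).
    ring. }
  rewrite E. replace (2 * D ^ 2 * eps) with (2 * D * (eps * D)) by ring.
  apply rect_int_bound; try lra.
  { apply Ccont_minus; auto. apply Ccont_affine. }
  intros w Hwx Hwy.
  assert (Hwz : Cmod (w - z) <= D).
  { eapply Rle_trans. apply Cmod_le_sum. destruct z as [zx zy]; simpl in *.
    assert (Rabs (fst w + - zx) <= x2 - x1) by (apply Rabs_le; lra).
    assert (Rabs (snd w + - zy) <= y2 - y1) by (apply Rabs_le; lra). unfold D; lra. }
  unfold L. replace (q w - (q z + l * (w - z)))%C with (q w - q z - l * (w - z))%C by ring.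
  eapply Rle_trans. apply Hl. lra. apply Rmult_le_compat_l; lra.
Qed.

Theorem goursat_rect q x1 x2 y1 y2 : Ccont q -> x1 <= x2 -> y1 <= y2 ->
  (forall z, x1 <= fst z <= x2 -> y1 <= snd z <= y2 -> exists l, cdiff q z l) ->
  rect_int q x1 x2 y1 y2 = 0%C.
Proof.
  intros Hq Hx Hy Hd.
  set (r0 := mk_rect x1 x2 y1 y2). change (rect_int q x1 x2 y1 y2) with (rect_int_of q r0).
  destruct (bisect_seq_common_point q r0 Hq Hx Hy) as [X [Y HXY]].
  destruct (HXY 0%nat) as [HX0 HY0].
  destruct (Hd (X, Y) HX0 HY0) as [l Hl]. apply cdiff_cdiff_eps in Hl.
  apply Cmod_eq_0, Rle_eps_eq_0; [apply Cmod_ge_0|]. intros e He.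
  set (S := (x2 - x1) + (y2 - y1)).
  set (eps := e / (2 * S ^ 2 + 1)).
  assert (Heps : 0 < eps) by (unfold eps; apply Rdiv_lt_0_compat; nra).
  destruct (Hl eps Heps) as [d [Hd0 Hld]].
  destruct (Pow_x_infinity 2 ltac:(rewrite Rabs_right; lra) ((S + 1) / d)) as [n Hn].
  specialize (Hn n (le_n n)). rewrite Rabs_right in Hn by (apply Rle_ge, pow_le; lra).
  assert (P2 : 0 < 2 ^ n) by (apply pow_lt; lra).
  destruct (bisect_seq_spec q r0 Hq Hx Hy n) as [Wn [Hn' Scale]]. simpl in Wn, Hn'.
  destruct (HXY n) as [HXn HYn].
  set (rn := bisect_seq q r0 n) in *.
  assert (Hsize : (rx2 rn - rx1 rn) + (ry2 rn - ry1 rn) = S / 2 ^ n)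
    by (rewrite Wn, Hn'; unfold S; field; lra).
  assert (Hsmall : S / 2 ^ n < d).
  { assert (S + 1 <= 2 ^ n * d) by (apply Rle_div_l; lra). apply Rlt_div_l; lra. }
  assert (Bn := rect_int_near_point q (X, Y) l eps d _ _ _ _ Hq (Rlt_le _ _ Heps) Hld HXn HYn
    ltac:(rewrite Hsize; exact Hsmall)).
  rewrite Hsize in Bn.
  (* quartering loses a factor 4 per step, exactly compensated by the squared size *)
  apply Rle_trans with (4 ^ n * Cmod (rect_int_of q rn)); [exact Scale|].
  apply Rle_trans with (4 ^ n * (2 * (S / 2 ^ n) ^ 2 * eps)).
  { apply Rmult_le_compat_l; [apply pow_le; lra | exact Bn]. }
  replace (4 ^ n * (2 * (S / 2 ^ n) ^ 2 * eps)) with (2 * S ^ 2 * eps) by (rewrite pow4_sqr; field; lra).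
  apply Rle_trans with ((2 * S ^ 2 + 1) * eps); [lra|].
  right. unfold eps. field. nra.
Qed.

Lemma rect_int_flat_x q x y1 y2 : rect_int q x x y1 y2 = 0%C.
Proof. unfold rect_int, hline_int. rewrite !CRInt_point. ring. Qed.

Lemma rect_int_flat_y q x1 x2 y : rect_int q x1 x2 y y = 0%C.
Proof. unfold rect_int, vline_int. rewrite !CRInt_point. ring. Qed.

Lemma rect_int_off_point q p u1 u2 v1 v2 : Ccont q -> (forall z, z <> p -> exists l, cdiff q z l) ->
  u1 <= u2 -> v1 <= v2 ->
  (u1 = u2 \/ v1 = v2 \/ ~ (u1 <= fst p <= u2 /\ v1 <= snd p <= v2)) -> rect_int q u1 u2 v1 v2 = 0%C.
Proof.
  intros Hq Hd Hu Hv [E|[E|E]].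
  - subst. apply rect_int_flat_x.
  - subst. apply rect_int_flat_y.
  - apply goursat_rect; auto. intros z Hz1 Hz2. apply Hd. intro X. subst. apply E. auto.
Qed.

(* Cutting along the lines through the sides of the clipped square, the four rectangles
   around it are flat or miss [p]. *)Lemma rect_int_clip q px py x1 x2 y1 y2 e : Ccont q ->
  (forall z, z <> (px, py) -> exists l, cdiff q z l) -> 0 < e ->
  x1 <= px <= x2 -> y1 <= py <= y2 ->
  rect_int q x1 x2 y1 y2 =
  rect_int q (Rmax x1 (px - e)) (Rmin x2 (px + e)) (Rmax y1 (py - e)) (Rmin y2 (py + e)).
Proof.
  intros Hq Hd He Hpx Hpy.
  set (a := Rmax x1 (px - e)). set (b := Rmin x2 (px + e)).
  set (c := Rmax y1 (py - e)). set (d := Rmin y2 (py + e)).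
  assert (Ha : x1 <= a <= px /\ (x1 = a \/ a = px - e)).
  { unfold a, Rmax. destruct (Rle_dec x1 (px - e)); lra. }
  assert (Hb : px <= b <= x2 /\ (b = x2 \/ b = px + e)).
  { unfold b, Rmin. destruct (Rle_dec x2 (px + e)); lra. }
  assert (Hc : y1 <= c <= py /\ (y1 = c \/ c = py - e)).
  { unfold c, Rmax. destruct (Rle_dec y1 (py - e)); lra. }
  assert (Hd' : py <= d <= y2 /\ (d = y2 \/ d = py + e)).
  { unfold d, Rmin. destruct (Rle_dec y2 (py + e)); lra. }
  assert (Z : forall u1 u2 v1 v2, u1 <= u2 -> v1 <= v2 ->
      (u1 = u2 \/ v1 = v2 \/ ~ (u1 <= px <= u2 /\ v1 <= py <= v2)) -> rect_int q u1 u2 v1 v2 = 0%C)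
    by (intros; apply rect_int_off_point with (px, py); auto).
  assert (Z1 : rect_int q x1 a y1 y2 = 0%C).
  { apply Z; lra. }
  assert (Z2 : rect_int q b x2 y1 y2 = 0%C).
  { apply Z; lra. }
  assert (Z3 : rect_int q a b y1 c = 0%C).
  { apply Z; lra. }
  assert (Z4 : rect_int q a b d y2 = 0%C).
  { apply Z; lra. }
  rewrite (rect_int_split_x q x1 a x2), (rect_int_split_x q a b x2),
    (rect_int_split_y q a b y1 c y2), (rect_int_split_y q a b c d y2) by auto.
  rewrite Z1, Z2, Z3, Z4. ring.
Qed.

Theorem goursat_rect_except q p x1 x2 y1 y2 : Ccont q -> x1 <= x2 -> y1 <= y2 ->
  (forall z, z <> p -> exists l, cdiff q z l) -> rect_int q x1 x2 y1 y2 = 0%C.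
Proof.
  intros Hq Hx Hy Hd.
  destruct (classic (x1 <= fst p <= x2 /\ y1 <= snd p <= y2)) as [[Hpx Hpy]|Hout].
  2: { apply rect_int_off_point with p; auto. }
  destruct p as [px py]. simpl in Hpx, Hpy.
  apply Cmod_eq_0, Rle_eps_eq_0; [apply Cmod_ge_0|]. intros eta Heta.
  destruct (Hq (px, py) 1) as [d0 [Hd0 H0]]; [lra|].
  set (B := Cmod (q (px, py)) + 1).
  assert (HB : 0 < B) by (unfold B; pose proof (Cmod_ge_0 (q (px, py))); lra).
  set (e := Rmin (d0 / 4) (eta / (8 * B))).
  assert (He : 0 < e) by (unfold e; apply Rmin_pos; apply Rdiv_lt_0_compat; lra).
  assert (He1 : e <= d0 / 4) by apply Rmin_l.
  assert (He2 : e <= eta / (8 * B)) by apply Rmin_r.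
  rewrite (rect_int_clip q px py x1 x2 y1 y2 e) by auto.
  set (a := Rmax x1 (px - e)). set (b := Rmin x2 (px + e)).
  set (c := Rmax y1 (py - e)). set (d := Rmin y2 (py + e)).
  assert (px - e <= a <= px) by (split; [apply Rmax_r | apply Rmax_lub; lra]).
  assert (px <= b <= px + e) by (split; [apply Rmin_glb; lra | apply Rmin_r]).
  assert (py - e <= c <= py) by (split; [apply Rmax_r | apply Rmax_lub; lra]).
  assert (py <= d <= py + e) by (split; [apply Rmin_glb; lra | apply Rmin_r]).
  eapply Rle_trans.
  { apply (rect_int_bound q a b c d B); auto; try lra. intros z Hz1 Hz2.
    assert (Hz : Cmod (z - (px, py)) < d0).
    { eapply Rle_lt_trans. apply Cmod_le_sum. simpl.
      assert (Rabs (fst z + - px) <= e) by (apply Rabs_le; lra).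
      assert (Rabs (snd z + - py) <= e) by (apply Rabs_le; lra). lra. }
    specialize (H0 z Hz).
    replace (q z) with (q (px, py) + (q z - q (px, py)))%C by ring.
    pose proof (Cmod_triangle (q (px, py)) (q z - q (px, py))). unfold B. lra. }
  apply Rle_trans with (8 * e * B); [nra|].
  apply Rle_trans with (8 * (eta / (8 * B)) * B); [nra|].
  right. field. lra.
Qed.

Definition rect_int_vanish (q : C -> C) : Prop :=
  forall x1 x2 y1 y2, x1 <= x2 -> y1 <= y2 -> rect_int q x1 x2 y1 y2 = 0%C.

Lemma rect_int_swap_x q x1 x2 y1 y2 : Ccont q -> rect_int q x2 x1 y1 y2 = (- rect_int q x1 x2 y1 y2)%C.
Proof.
  intros Hq. unfold rect_int, hline_int.
  rewrite (CRInt_swap (fun t => q (t, y1))) by (apply ex_hline_int; auto).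
  rewrite (CRInt_swap (fun t => q (t, y2))) by (apply ex_hline_int; auto). ring.
Qed.

Lemma rect_int_swap_y q x1 x2 y1 y2 : Ccont q -> rect_int q x1 x2 y2 y1 = (- rect_int q x1 x2 y1 y2)%C.
Proof.
  intros Hq. unfold rect_int, vline_int.
  rewrite (CRInt_swap (fun t => q (x1, t))) by (apply ex_vline_int; auto).
  rewrite (CRInt_swap (fun t => q (x2, t))) by (apply ex_vline_int; auto). ring.
Qed.

Lemma rect_int_vanish_all q : Ccont q -> rect_int_vanish q ->
  forall x1 x2 y1 y2, rect_int q x1 x2 y1 y2 = 0%C.
Proof.
  intros Hq H x1 x2 y1 y2.
  destruct (Rle_dec x1 x2); destruct (Rle_dec y1 y2).
  - apply H; lra.
  - replace (rect_int q x1 x2 y1 y2) with (- rect_int q x1 x2 y2 y1)%C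
      by (rewrite rect_int_swap_y; auto; ring).
    rewrite H by lra. ring.
  - replace (rect_int q x1 x2 y1 y2) with (- rect_int q x2 x1 y1 y2)%C
      by (rewrite rect_int_swap_x; auto; ring).
    rewrite H by lra. ring.
  - replace (rect_int q x1 x2 y1 y2) with (- rect_int q x2 x1 y1 y2)%C
      by (rewrite rect_int_swap_x; auto; ring).
    replace (rect_int q x2 x1 y1 y2) with (- rect_int q x2 x1 y2 y1)%C
      by (rewrite rect_int_swap_y; auto; ring).
    rewrite H by lra. ring.
Qed.

Definition rect_primitive (q : C -> C) (z : C) : C := (hline_int q 0 0 (fst z) + Ci * vline_int q (fst z) 0 (snd z))%C.

Lemma rect_primitive_diff q z w : Ccont q -> rect_int_vanish q ->
  (rect_primitive q w - rect_primitive q z = hline_int q (snd z) (fst z) (fst w) + Ci * vline_int q (fst w) (snd z) (snd w))%C.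
Proof.
  intros Hq H. destruct z as [x0 y0], w as [x1 y1]. unfold rect_primitive; simpl.
  assert (R0 := rect_int_vanish_all q Hq H x0 x1 0 y0). unfold rect_int in R0.
  assert (E1 : hline_int q 0 0 x1 = (hline_int q 0 0 x0 + hline_int q 0 x0 x1)%C).
  { unfold hline_int. apply CRInt_Chasles; apply ex_hline_int; auto. }
  assert (E2 : vline_int q x1 0 y1 = (vline_int q x1 0 y0 + vline_int q x1 y0 y1)%C).
  { unfold vline_int. apply CRInt_Chasles; apply ex_vline_int; auto. }
  rewrite E1, E2.
  replace (hline_int q 0 0 x0 + hline_int q 0 x0 x1 + Ci * (vline_int q x1 0 y0 + vline_int q x1 y0 y1) - (hline_int q 0 0 x0 + Ci * vline_int q x0 0 y0))%C
    with (hline_int q 0 x0 x1 + Ci * vline_int q x1 0 y0 - hline_int q y0 x0 x1 - Ci * vline_int q x0 0 y0 + hline_int q y0 x0 x1 + Ci * vline_int q x1 y0 y1)%C by ring.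
  rewrite R0. ring.
Qed.

Lemma rect_primitive_cdiff q z : Ccont q -> rect_int_vanish q -> cdiff (rect_primitive q) z (q z).
Proof.
  intros Hq H. apply cdiff_eps_cdiff. intros e He.
  destruct (Hq z (e / 2)) as [d [Hd Hd']]; [lra|].
  exists (d / 2). split; [lra|]. intros w Hw.
  rewrite rect_primitive_diff by auto. destruct z as [x0 y0], w as [x1 y1]. simpl.
  assert (Hdx : Rabs (x1 - x0) <= Cmod ((x1, y1) - (x0, y0))%C).
  { pose proof (Cmod_fst ((x1, y1) - (x0, y0))%C). simpl in H0. unfold Rminus. lra. }
  assert (Hdy : Rabs (y1 - y0) <= Cmod ((x1, y1) - (x0, y0))%C).
  { pose proof (Cmod_snd ((x1, y1) - (x0, y0))%C). simpl in H0. unfold Rminus. lra. }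
  set (D := Cmod ((x1, y1) - (x0, y0))%C) in *.
  assert (Ew : ((x1, y1) - (x0, y0))%C = (RtoC (x1 - x0) + Ci * RtoC (y1 - y0))%C).
  { unfold RtoC, Ci, Cminus, Cplus, Copp, Cmult; simpl. f_equal; ring. }
  rewrite Ew at 1.
  replace (hline_int q y0 x0 x1 + Ci * vline_int q x1 y0 y1
             - q (x0, y0) * (RtoC (x1 - x0) + Ci * RtoC (y1 - y0)))%C
    with ((hline_int q y0 x0 x1 - RtoC (x1 - x0) * q (x0, y0))
          + Ci * (vline_int q x1 y0 y1 - RtoC (y1 - y0) * q (x0, y0)))%C by ring.
  assert (B1 : Cmod (hline_int q y0 x0 x1 - RtoC (x1 - x0) * q (x0, y0)) <= Rabs (x1 - x0) * (e / 2)).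
  { apply CRInt_minus_const_bound; [apply ex_hline_int; exact Hq|].
    intros t Ht. left. apply Hd'. eapply Rle_lt_trans; [apply Cmod_le_sum|]. simpl.
    pose proof (Rabs_sub_le_between x0 x1 t Ht).
    replace (y0 + - y0) with 0 by ring. rewrite Rabs_R0. unfold Rminus in *. lra. }
  assert (B2 : Cmod (vline_int q x1 y0 y1 - RtoC (y1 - y0) * q (x0, y0)) <= Rabs (y1 - y0) * (e / 2)).
  { apply CRInt_minus_const_bound; [apply ex_vline_int; exact Hq|].
    intros t Ht. left. apply Hd'. eapply Rle_lt_trans; [apply Cmod_le_sum|]. simpl.
    pose proof (Rabs_sub_le_between y0 y1 t Ht). unfold Rminus in *. lra. }
  eapply Rle_trans; [apply Cmod_triangle|]. rewrite Cmod_mult, Cmod_Ci, Rmult_1_l.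
  assert (Rabs (x1 - x0) * (e / 2) <= D * (e / 2)) by (apply Rmult_le_compat_r; lra).
  assert (Rabs (y1 - y0) * (e / 2) <= D * (e / 2)) by (apply Rmult_le_compat_r; lra).
  lra.
Qed.

Definition circle_deriv (r t : R) : C := (Ci * RtoC r * (cos t, sin t))%C.
Definition circle_int (q : C -> C) (p : C) (r : R) : C :=
  CRInt (fun t => q (circle p r t) * circle_deriv r t)%C 0 (2 * PI).

Lemma rcont_ext f g t : (forall u, f u = g u) -> rcont f t -> rcont g t.
Proof. intros E H e He. destruct (H e He) as [d [Hd H']]. exists d. split; auto.
  intros u Hu. rewrite <- !E. auto. Qed.

Lemma rcont_circle p r t : rcont (circle p r) t.
Proof. eapply rdiff_rcont. apply rdiff_circle. Qed.

Lemma rcont_circle_deriv r t : rcont (circle_deriv r) t.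
Proof.
  apply rcont_ext with (fun u => Ci * RtoC r * circle 0 1 u)%C.
  { intro u. unfold circle_deriv, circle. unfold RtoC, Ci, Cplus, Cmult; simpl. f_equal; ring. }
  apply rcont_mult. apply rcont_const. apply rcont_circle.
Qed.

Lemma circle_2PI p r : circle p r (2 * PI) = circle p r 0.
Proof. unfold circle. rewrite cos_2PI, sin_2PI, cos_0, sin_0. reflexivity. Qed.

Lemma circle_int_primitive (P q : C -> C) p r :
  (forall t, cdiff P (circle p r t) (q (circle p r t))) -> (forall t, ccont q (circle p r t)) ->
  circle_int q p r = 0%C.
Proof.
  intros HP Hq. unfold circle_int. apply CRInt_unique.
  assert (E : (P (circle p r (2 * PI)) - P (circle p r 0))%C = 0%C) by (rewrite circle_2PI; ring).
  rewrite <- E.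
  apply (is_CRInt_FTC (fun t => P (circle p r t))).
  - intros t _. apply rdiff_rdiff_eps. apply cdiff_comp_path. apply HP. apply rdiff_circle.
  - intros t _. apply rcont_mult. apply rcont_comp. apply Hq. apply rcont_circle.
    apply rcont_circle_deriv.
Qed.

Lemma cauchy_circle q p r s : Ccont q -> (forall z, z <> s -> exists l, cdiff q z l) ->
  circle_int q p r = 0%C.
Proof.
  intros Hq Hd. apply circle_int_primitive with (rect_primitive q).
  - intros t. apply rect_primitive_cdiff; auto. intros x1 x2 y1 y2 H1 H2.
    apply goursat_rect_except with s; auto.
  - intros t. apply Hq.
Qed.

Lemma ex_CRInt_circle q p r : (forall t, ccont q (circle p r t)) ->
  ex_CRInt (fun t => q (circle p r t) * circle_deriv r t)%C 0 (2 * PI).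
Proof.
  intros H. apply ex_CRInt_cont. intros t _. apply rcont_mult. apply rcont_comp. apply H.
  apply rcont_circle.
  apply rcont_circle_deriv.
Qed.

Lemma circle_int_plus q h p r : (forall t, ccont q (circle p r t)) ->
  (forall t, ccont h (circle p r t)) ->
  circle_int (fun z => q z + h z)%C p r = (circle_int q p r + circle_int h p r)%C.
Proof.
  intros H1 H2. unfold circle_int. apply CRInt_unique.
  apply is_CRInt_ext
    with (fun t => q (circle p r t) * circle_deriv r t + h (circle p r t) * circle_deriv r t)%C.
  { intros; ring. }
  apply is_CRInt_plus; apply CRInt_correct; apply ex_CRInt_circle; auto.
Qed.

Lemma circle_int_scal q p r (c : C) : (forall t, ccont q (circle p r t)) ->
  circle_int (fun z => c * q z)%C p r = (c * circle_int q p r)%C.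
Proof.
  intros H1. unfold circle_int. apply CRInt_unique.
  apply is_CRInt_ext with (fun t => c * (q (circle p r t) * circle_deriv r t))%C.
  { intros; ring. }
  apply is_CRInt_scal; apply CRInt_correct; apply ex_CRInt_circle; auto.
Qed.

Lemma circle_int_ext q h p r : (forall t, q (circle p r t) = h (circle p r t)) ->
  circle_int q p r = circle_int h p r.
Proof.
  intros E. unfold circle_int, CRInt. apply (@RInt_ext C_R_CompleteNormedModule). intros t _.
  rewrite E. reflexivity.
Qed.

Lemma circle_int_bound q p r M : 0 <= r ->
  (forall t, 0 <= t <= 2 * PI -> Cmod (q (circle p r t)) <= M) -> (forall t, ccont q (circle p r t)) ->
  Cmod (circle_int q p r) <= 2 * PI * (r * M).
Proof.
  intros Hr HM Hc. unfold circle_int.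
  replace (2 * PI * (r * M)) with ((2 * PI - 0) * (r * M)) by ring.
  apply CRInt_bound. pose proof PI_RGT_0; lra. apply ex_CRInt_circle; auto.
  intros t Ht. rewrite Cmod_mult. unfold circle_deriv. rewrite !Cmod_mult, Cmod_Ci, Cmod_R.
  assert (Cmod (cos t, sin t) = 1).
  { unfold Cmod; simpl. replace (cos t * (cos t * 1) + sin t * (sin t * 1)) with 1.
    apply sqrt_1. pose proof (sin2_cos2 t). unfold Rsqr in H. lra. }
  rewrite H, Rabs_right by lra. pose proof (HM t Ht). pose proof (Cmod_ge_0 (q (circle p r t))). nra.
Qed.

Lemma ccont_pow f z n : ccont f z -> ccont (fun w => (f w) ^ n)%C z.
Proof.
  intros H. induction n as [|n IH].
  - simpl. apply ccont_const.
  - simpl. apply ccont_mult; auto.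
Qed.

Lemma cdiff_pow_sub p w m : cdiff (fun z => (z - p) ^ (S m))%C w (RtoC (INR (S m)) * (w - p) ^ m)%C.
Proof.
  induction m as [|m IH].
  - eapply cdiff_eq. simpl.
    apply (cdiff_mult (fun z => z - p)%C (fun _ => 1%C)).
    apply (cdiff_plus (fun z => z) (fun _ => - p)%C). apply cdiff_id. apply cdiff_const.
    apply cdiff_const.
    simpl. ring.
  - eapply cdiff_eq.
    apply (cdiff_mult (fun z => z - p)%C (fun z => (z - p) ^ (S m))%C).
    apply (cdiff_plus (fun z => z) (fun _ => - p)%C). apply cdiff_id. apply cdiff_const. exact IH.
    rewrite !S_INR. change ((w - p) ^ S m)%C with ((w - p) * (w - p) ^ m)%C.
    rewrite !RtoC_plus. ring.
Qed.

Lemma Cmod_circle_sub p r t : 0 <= r -> Cmod (circle p r t - p) = r.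
Proof.
  intros Hr. unfold circle.
  replace (p + RtoC r * (cos t, sin t) - p)%C with (RtoC r * (cos t, sin t))%C by ring.
  rewrite Cmod_mult, Cmod_R, Rabs_right by lra.
  assert (Cmod (cos t, sin t) = 1).
  { unfold Cmod; simpl. replace (cos t * (cos t * 1) + sin t * (sin t * 1)) with 1.
    apply sqrt_1. pose proof (sin2_cos2 t). unfold Rsqr in H. lra. }
  rewrite H. ring.
Qed.

Lemma circle_neq_inside p r t z : 0 < r -> Cmod (z - p) < r -> circle p r t <> z.
Proof.
  intros Hr Hz E. pose proof (Cmod_circle_sub p r t ltac:(lra)). rewrite E in H. lra.
Qed.

Lemma circle_neq_center p r t : 0 < r -> circle p r t <> p.
Proof.
  intros Hr E. pose proof (Cmod_circle_sub p r t ltac:(lra)). rewrite E in H.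
  replace (p - p)%C with (RtoC 0) in H by ring. rewrite Cmod_0 in H. lra.
Qed.

Lemma circle_int_inv_pow p r (c : C) k : 0 < r ->
  circle_int (fun z => c ^ (S k) * / (z - p) ^ (S (S k)))%C p r = 0%C.
Proof.
  intros Hr.
  apply circle_int_primitive with (fun z => - c ^ (S k) / RtoC (INR (S k)) * / (z - p) ^ (S k))%C.
  - intros t. set (w := circle p r t).
    assert (Hw : (w - p)%C <> 0%C) by (apply Cminus_neq_0; apply circle_neq_center; auto).
    assert (Hk : RtoC (INR (S k)) <> 0%C)
      by (intro X; apply RtoC_inj in X; pose proof (pos_INR k); rewrite S_INR in X; lra).
    assert (HA : ((w - p) ^ k)%C <> 0%C) by (apply Cpow_nz; auto).
    eapply cdiff_eq.
    apply (cdiff_mult (fun _ => - c ^ S k / RtoC (INR (S k)))%C (fun z => / (z - p) ^ S k)%C).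
    apply cdiff_const. apply cdiff_inv. apply cdiff_pow_sub. apply Cpow_nz; auto.
    cbv beta.
    change ((w - p) ^ S k)%C with ((w - p) * (w - p) ^ k)%C.
    change ((w - p) ^ S (S k))%C with ((w - p) * ((w - p) * (w - p) ^ k))%C.
    set (Ck := (c ^ S k)%C). set (A := ((w - p) ^ k)%C). set (K := RtoC (INR (S k))) in *.
    field. repeat split; auto.
  - intros t. apply ccont_mult. apply ccont_const. apply ccont_inv.
    apply ccont_pow. apply (ccont_plus (fun z => z) (fun _ => - p)%C). apply ccont_id. apply ccont_const.
    apply Cpow_nz. apply Cminus_neq_0. apply circle_neq_center; auto.
Qed.

Lemma circle_int_inv_center p r : 0 < r ->
  circle_int (fun z => / (z - p))%C p r = (RtoC (2 * PI) * Ci)%C.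
Proof.
  intros Hr. unfold circle_int.
  rewrite (RInt_ext (V := C_R_CompleteNormedModule) _ (fun _ => Ci)).
  - change (CRInt (fun _ => Ci) 0 (2 * PI) = (RtoC (2 * PI) * Ci)%C). rewrite CRInt_const. f_equal.
    f_equal. ring.
  - intros t _. assert (Hw : (circle p r t - p)%C <> 0%C)
      by (apply Cminus_neq_0; apply circle_neq_center; auto).
    unfold circle_deriv. replace (Ci * RtoC r * (cos t, sin t))%C with (Ci * (circle p r t - p))%C.
    change ((/ (circle p r t - p) * (Ci * (circle p r t - p)))%C = Ci :> C). field. auto.
    unfold circle. ring.
Qed.

Fixpoint Csum (F : nat -> C) (N : nat) : C :=
  match N with O => 0%C | S n => (Csum F n + F n)%C end.

Lemma Cpow_div_S (c u : C) N : u <> 0%C -> (c ^ N * / u ^ (S N) = (c * / u) ^ N * / u)%C.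
Proof.
  intros Hu. rewrite Cpow_mult_l, Cpow_inv by auto.
  change (u ^ S N)%C with (u * u ^ N)%C. assert ((u ^ N)%C <> 0%C) by (apply Cpow_nz; auto).
  field. split; auto.
Qed.

Lemma Cinv_geometric (c u : C) N : u <> 0%C -> (u - c)%C <> 0%C ->
  (/ (u - c) = Csum (fun k => c ^ k * / u ^ (S k)) N + (c * / u) ^ N * / (u - c))%C.
Proof.
  intros Hu Huc. induction N as [|N IH].
  - simpl. ring.
  - assert (E : ((c * / u) ^ N * / (u - c) = c ^ N * / u ^ (S N) + (c * / u) ^ (S N) * / (u - c))%C).
    { rewrite Cpow_div_S by auto.
      change ((c * / u) ^ S N)%C with ((c * / u) * (c * / u) ^ N)%C.
      set (X := ((c * / u) ^ N)%C). field. split; auto. }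
    rewrite IH at 1. rewrite E.
    change (Csum (fun k => c ^ k * / u ^ (S k)) (S N))%C with
      (Csum (fun k => c ^ k * / u ^ (S k)) N + c ^ N * / u ^ (S N))%C. ring.
Qed.

Lemma ccont_ext f g z0 d : 0 < d -> (forall w, Cmod (w - z0) < d -> f w = g w) -> ccont f z0 ->
  ccont g z0.
Proof.
  intros Hd E H e He. destruct (H e He) as [d1 [Hd1 H1]]. exists (Rmin d d1).
  split; [apply Rmin_pos; lra|].
  intros w Hw. pose proof (Rmin_l d d1). pose proof (Rmin_r d d1).
  rewrite <- (E w) by lra. rewrite <- (E z0). apply H1; lra.
  replace (z0 - z0)%C with (RtoC 0) by ring. rewrite Cmod_0. lra.
Qed.

Lemma ccont_sub_const z p : ccont (fun w => w - p)%C z.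
Proof. apply (ccont_plus (fun w => w) (fun _ => - p)%C). apply ccont_id. apply ccont_const. Qed.

Lemma ccont_Csum (F : nat -> C -> C) z N : (forall k, ccont (F k) z) ->
  ccont (fun w => Csum (fun k => F k w) N) z.
Proof.
  intros H. induction N as [|N IH].
  - simpl. apply ccont_const.
  - simpl. apply ccont_plus; auto.
Qed.

Lemma ccont_inv_sub_on_circle p r z : 0 < r -> Cmod (z - p) < r ->
  forall t, ccont (fun w => / (w - z))%C (circle p r t).
Proof.
  intros Hr Hz t. apply ccont_inv. apply ccont_sub_const. apply Cminus_neq_0.
  apply circle_neq_inside; auto.
Qed.

Lemma ccont_inv_pow_on_circle p r k : 0 < r -> forall t, ccont (fun w => / (w - p) ^ k)%C (circle p r t).
Proof.
  intros Hr t. apply ccont_inv. apply ccont_pow. apply ccont_sub_const. apply Cpow_nz.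
  apply Cminus_neq_0. apply circle_neq_center; auto.
Qed.

Lemma circle_int_Csum p r (c : C) N : 0 < r ->
  circle_int (fun w => Csum (fun k => c ^ k * / (w - p) ^ (S k)) (S N))%C p r = (RtoC (2 * PI) * Ci)%C.
Proof.
  intros Hr. induction N as [|N IH].
  - rewrite <- (circle_int_inv_center p r Hr). apply circle_int_ext. intros t. simpl.
    assert (Hw : (circle p r t - p)%C <> 0%C) by (apply Cminus_neq_0; apply circle_neq_center; auto).
    field. auto.
  - rewrite (circle_int_ext _ (fun w => Csum (fun k => c ^ k * / (w - p) ^ (S k)) (S N) + c ^ (S N) * / (w - p) ^ (S (S N)))%C).
    2: { intros t. reflexivity. }
    rewrite circle_int_plus. rewrite IH. rewrite circle_int_inv_pow by auto. ring.
    + intros t. apply (ccont_Csum (fun k w => c ^ k * / (w - p) ^ (S k))%C).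
      intros k. apply ccont_mult. apply ccont_const. apply ccont_inv_pow_on_circle; auto.
    + intros t. apply ccont_mult. apply ccont_const. apply ccont_inv_pow_on_circle; auto.
Qed.

Lemma Cmod_triangle_rev (a b : C) : Cmod a - Cmod b <= Cmod (a - b).
Proof. pose proof (Cmod_triangle (a - b) b). replace (a - b + b)%C with a in H by ring. lra. Qed.

(* Expanding [1 / (w - z)] geometrically in [(z - p) / (w - p)] on the circle, every term but
   the first integrates to [0]; the remainder after [N + 1] terms is [O(rho ^ (N + 1))]. *)
Lemma circle_int_inv_sub_approx p r z N : 0 < r -> Cmod (z - p) < r ->
  Cmod (circle_int (fun w => / (w - z))%C p r - RtoC (2 * PI) * Ci) <=
  2 * PI * (r * ((Cmod (z - p) / r) ^ S N * / (r - Cmod (z - p)))).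
Proof.
  intros Hr Hz. set (c := (z - p)%C). set (rho := Cmod c / r).
  assert (Hc0 : 0 <= Cmod c) by apply Cmod_ge_0.
  assert (Hrho0 : 0 <= rho) by (unfold rho; apply Rdiv_le_0_compat; lra).
  rewrite (circle_int_ext _ (fun w => Csum (fun k => c ^ k * / (w - p) ^ (S k)) (S N) + (c * / (w - p)) ^ (S N) * / (w - z))%C).
  2: { intros t. assert (Hu : (circle p r t - p)%C <> 0%C)
    by (apply Cminus_neq_0; apply circle_neq_center; auto).
       assert (Huc : (circle p r t - p - c)%C <> 0%C).
       { replace (circle p r t - p - c)%C with (circle p r t - z)%C by (unfold c; ring).
         apply Cminus_neq_0. apply circle_neq_inside; auto. }
       replace (circle p r t - z)%C with (circle p r t - p - c)%C by (unfold c; ring).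
       apply Cinv_geometric; auto. }
  rewrite circle_int_plus. rewrite circle_int_Csum by auto.
  2: { intros t. apply (ccont_Csum (fun k w => c ^ k * / (w - p) ^ (S k))%C).
       intros k. apply ccont_mult. apply ccont_const. apply ccont_inv_pow_on_circle; auto. }
  2: { intros t. apply ccont_mult. apply ccont_pow. apply ccont_mult. apply ccont_const.
       apply ccont_inv. apply ccont_sub_const. apply Cminus_neq_0. apply circle_neq_center; auto.
       apply ccont_inv_sub_on_circle; auto. }
  replace (RtoC (2 * PI) * Ci + circle_int (fun w => (c * / (w - p)) ^ S N * / (w - z))%C p r - RtoC (2 * PI) * Ci)%C
    with (circle_int (fun w => (c * / (w - p)) ^ S N * / (w - z))%C p r) by ring.
  apply circle_int_bound. lra.
  - intros t _. assert (Hu : (circle p r t - p)%C <> 0%C)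
      by (apply Cminus_neq_0; apply circle_neq_center; auto).
    rewrite Cmod_mult, Cmod_pow, Cmod_mult, Cmod_inv, Cmod_circle_sub by (auto; lra).
    rewrite Cmod_inv by (apply Cminus_neq_0; apply circle_neq_inside; auto).
    apply Rmult_le_compat. apply pow_le. apply Rmult_le_pos; auto. left; apply Rinv_0_lt_compat; lra.
    left; apply Rinv_0_lt_compat. apply Cmod_gt_0. apply Cminus_neq_0; apply circle_neq_inside; auto.
    right. reflexivity.
    apply Rinv_le_contravar. unfold c; lra.
    pose proof (Cmod_triangle_rev (circle p r t - p) c). rewrite Cmod_circle_sub in H by lra.
    replace (circle p r t - p - c)%C with (circle p r t - z)%C in H by (unfold c; ring). lra.
  - intros t. apply ccont_mult. apply ccont_pow. apply ccont_mult. apply ccont_const.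
    apply ccont_inv. apply ccont_sub_const. apply Cminus_neq_0. apply circle_neq_center; auto.
    apply ccont_inv_sub_on_circle; auto.
Qed.

Theorem circle_int_inv_sub p r z : 0 < r -> Cmod (z - p) < r ->
  circle_int (fun w => / (w - z))%C p r = (RtoC (2 * PI) * Ci)%C.
Proof.
  intros Hr Hz. set (rho := Cmod (z - p) / r).
  assert (Hrho0 : 0 <= rho) by (unfold rho; apply Rdiv_le_0_compat; [apply Cmod_ge_0 | lra]).
  assert (Hrho1 : rho < 1) by (apply Rlt_div_l; lra).
  set (K := 2 * PI * (r * / (r - Cmod (z - p)))).
  assert (HK : 0 < K) by (unfold K; pose proof PI_RGT_0; apply Rmult_lt_0_compat; [lra|];
    apply Rmult_lt_0_compat; [lra| apply Rinv_0_lt_compat; lra]).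
  apply Ceq_minus, Cmod_eq_0, Rle_eps_eq_0; [apply Cmod_ge_0|].
  intros e He. destruct (pow_lt_1_zero rho ltac:(rewrite Rabs_right; lra) (e / K)) as [N HN].
  { apply Rdiv_lt_0_compat; lra. }
  specialize (HN (S N) ltac:(lia)). rewrite Rabs_right in HN by (apply Rle_ge, pow_le; lra).
  eapply Rle_trans; [apply (circle_int_inv_sub_approx p r z N Hr Hz)|]. fold rho.
  replace (2 * PI * (r * (rho ^ S N * / (r - Cmod (z - p))))) with (K * rho ^ S N) by (unfold K; ring).
  apply Rle_trans with (K * (e / K)); [apply Rmult_le_compat_l; lra | right; field; lra].
Qed.

(** * Cauchy's integral formula *)

Definition holomorphic (f : C -> C) : Prop := forall w, exists l, cdiff f w l.

Lemma holomorphic_Ccont f : holomorphic f -> Ccont f.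
Proof. intros H z. destruct (H z) as [l Hl]. eapply cdiff_ccont; eauto. Qed.

Lemma Rabs_Cmod_sub_le (a b : C) : Rabs (Cmod a - Cmod b) <= Cmod (a - b).
Proof.
  apply Rabs_le. split.
  - pose proof (Cmod_triangle_rev b a). rewrite Cmod_sub_sym in H. lra.
  - apply Cmod_triangle_rev.
Qed.

Lemma circle_Cmod_bounded f p r : Ccont f -> exists M, forall t, 0 <= t <= 2 * PI ->
  Cmod (f (circle p r t)) <= M.
Proof.
  intros Hf.
  destruct (continuity_ab_maj (fun t => Cmod (f (circle p r t))) 0 (2 * PI)) as [Mx [HM _]].
  - pose proof PI_RGT_0; lra.
  - intros c _. unfold continuity_pt, continue_in, limit1_in, limit_in. simpl. unfold R_dist.
    intros e He. destruct (rcont_comp f (circle p r) c (Hf _) (rcont_circle p r c) e He) as [d [Hd H]].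
    exists d. split; [lra|]. intros x [_ Hx]. eapply Rle_lt_trans. apply Rabs_Cmod_sub_le. apply H.
    exact Hx.
  - exists (Cmod (f (circle p r Mx))). exact HM.
Qed.

Lemma diff_quotient_extension f z : holomorphic f ->
  exists g, Ccont g /\ (forall w, w <> z -> exists l, cdiff g w l) /\
    forall w, w <> z -> g w = ((f w - f z) * / (w - z))%C.
Proof.
  intros Hf.
  destruct (Hf z) as [l Hl]. destruct Hl as [phi [d [Hd [Hc [Hphi Heq]]]]].
  set (h := fun w => ((f w - f z) * / (w - z))%C).
  exists (fun w => if Ceq_dec w z then l else h w).
  assert (Hh : forall w0, w0 <> z -> exists l1, cdiff h w0 l1).
  { intros w0 Hw0. unfold h. destruct (Hf w0) as [l0 Hl0]. eexists.
    apply (cdiff_mult (fun w => f w - f z)%C (fun w => / (w - z))%C).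
    - apply (cdiff_plus f (fun _ => - f z)%C). exact Hl0. apply cdiff_const.
    - apply (cdiff_inv (fun w => w - z)%C). apply (cdiff_plus (fun w => w) (fun _ => - z)%C).
      apply cdiff_id. apply cdiff_const. apply Cminus_neq_0; auto. }
  assert (Gh : forall w0, w0 <> z -> forall w, Cmod (w - w0) < Cmod (w0 - z) ->
                 h w = if Ceq_dec w z then l else h w).
  { intros w0 Hw0 w Hw. destruct (Ceq_dec w z) as [E|E]; auto.
    subst. rewrite Cmod_sub_sym in Hw. lra. }
  assert (Pw : forall w0, w0 <> z -> 0 < Cmod (w0 - z)).
  { intros. apply Cmod_gt_0. apply Cminus_neq_0; auto. }
  split; [|split].
  - intro w0. destruct (Ceq_dec w0 z) as [E|E].
    + subst w0. apply ccont_ext with phi d; [exact Hd | | exact Hc].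
      intros w Hw. destruct (Ceq_dec w z) as [E|E]; [subst; auto|].
      unfold h. rewrite Heq by auto. field. apply Cminus_neq_0; auto.
    + apply ccont_ext with h (Cmod (w0 - z)); [apply Pw; exact E | apply Gh; exact E |].
      destruct (Hh w0 E) as [l1 Hl1]. eapply cdiff_ccont. exact Hl1.
  - intros w0 Hw0. destruct (Hh w0 Hw0) as [l1 Hl1]. exists l1.
    apply cdiff_ext with h (Cmod (w0 - z)); [apply Pw | apply Gh | ]; auto.
  - intros w Hw. destruct (Ceq_dec w z); [contradiction | reflexivity].
Qed.

Theorem cauchy_integral_formula f p r z : holomorphic f -> 0 < r -> Cmod (z - p) < r ->
  circle_int (fun w => f w * / (w - z))%C p r = (RtoC (2 * PI) * Ci * f z)%C.
Proof.
  intros Hf Hr Hz.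
  destruct (diff_quotient_extension f z Hf) as [g [Gc [Gd Hg]]].
  assert (CG : circle_int g p r = 0%C) by (apply cauchy_circle with z; auto).
  rewrite (circle_int_ext _ (fun w => g w + f z * / (w - z))%C).
  2: { intros t. assert (Hn := circle_neq_inside p r t z Hr Hz). rewrite Hg by auto.
       field. apply Cminus_neq_0; auto. }
  rewrite circle_int_plus; [| intros t; apply Gc | intros t; apply ccont_mult;
    [apply ccont_const | apply ccont_inv_sub_on_circle; auto]].
  rewrite circle_int_scal by (intros t; apply ccont_inv_sub_on_circle; auto).
  rewrite CG, circle_int_inv_sub by auto. ring.
Qed.

Lemma ccont_fdiv f h z : ccont f z -> ccont h z -> h z <> 0%C -> ccont (fun w => f w * / h w)%C z.
Proof. intros H1 H2 H3. apply ccont_mult; auto. apply ccont_inv; auto. Qed.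

Lemma twoPIi_neq_0 : (RtoC (2 * PI) * Ci)%C <> 0%C.
Proof.
  apply Cmult_neq_0. intro X. apply RtoC_inj in X. pose proof PI_RGT_0. lra. apply Ci_nz.
Qed.

Ltac ccont_rational := repeat first [apply ccont_sub_const | apply ccont_const | apply ccont_mult | apply ccont_plus].

Section FactorZero.
Variable f : C -> C.
Variable p : C.
Hypothesis Hf : holomorphic f.
Hypothesis Hp : f p = 0%C.

Let K0 := (/ (RtoC (2 * PI) * Ci))%C.
Let Fz (z : C) := fun w => (f w * / ((w - z) * (w - p)))%C.
(* For [z <> p] Cauchy's formula gives [Phi z = f z / (z - p)], while [Phi] is differentiable
   at [p]: the singularity of [f w / (w - p)] at the zero [p] is removable. *)
Let Phi (z : C) := (K0 * circle_int (Fz z) p 1)%C.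
Let F3 := fun w => (f w * / ((w - p) * (w - p) * (w - p)))%C.
Let D := (K0 * circle_int F3 p 1)%C.
Let G (z : C) := fun w => (f w * / ((w - z) * ((w - p) * (w - p) * (w - p))))%C.

Let Hfc : Ccont f := holomorphic_Ccont f Hf.

Lemma circle1_sub_neq_0 (z : C) t : Cmod (z - p) < 1 -> (circle p 1 t - z)%C <> 0%C.
Proof. intros H. apply Cminus_neq_0. apply circle_neq_inside; auto; lra. Qed.

Lemma circle1_sub_center_neq_0 t : (circle p 1 t - p)%C <> 0%C.
Proof. apply Cminus_neq_0. apply circle_neq_center; lra. Qed.

Lemma Phi_off_center z : z <> p -> Cmod (z - p) < 1 -> Phi z = (f z * / (z - p))%C.
Proof.
  intros Hz1 Hz2. unfold Phi.
  assert (Hzp : (z - p)%C <> 0%C) by (apply Cminus_neq_0; auto).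
  rewrite (circle_int_ext (Fz z) (fun w => / (z - p) * (f w * / (w - z) + (- 1) * (f w * / (w - p))))%C).
  2: { intros t. unfold Fz. pose proof (circle1_sub_neq_0 z t Hz2).
  pose proof (circle1_sub_center_neq_0 t). field. repeat split; auto. }
  rewrite circle_int_scal.
  2: { intros t. apply ccont_plus. apply ccont_fdiv; auto. apply ccont_sub_const.
  apply circle1_sub_neq_0; auto.
       apply ccont_mult. apply ccont_const. apply ccont_fdiv; auto. apply ccont_sub_const.
       apply circle1_sub_center_neq_0. }
  rewrite circle_int_plus.
  2: { intros t. apply ccont_fdiv; auto. apply ccont_sub_const. apply circle1_sub_neq_0; auto. }
  2: { intros t. apply ccont_mult. apply ccont_const. apply ccont_fdiv; auto. apply ccont_sub_const.
  apply circle1_sub_center_neq_0. }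
  rewrite circle_int_scal.
  2: { intros t. apply ccont_fdiv; auto. apply ccont_sub_const. apply circle1_sub_center_neq_0. }
  rewrite !cauchy_integral_formula
    by (auto; try lra; replace (p - p)%C with (RtoC 0) by ring; rewrite Cmod_0; lra).
  rewrite Hp. unfold K0. pose proof twoPIi_neq_0. field. split; auto. split. apply Ci_nz. intro X.
  apply RtoC_inj in X. pose proof PI_RGT_0. lra.
Qed.

Lemma Phi_expansion z : Cmod (z - p) < 1 / 2 ->
  (Phi z - Phi p - D * (z - p) = K0 * ((z - p) * (z - p)) * circle_int (G z) p 1)%C.
Proof.
  intros Hz. assert (Hz' : Cmod (z - p) < 1) by lra.
  unfold Phi, D.
  assert (Cz : forall t, ccont (Fz z) (circle p 1 t)).
  { intros t. apply ccont_fdiv; auto. ccont_rational.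
    repeat first [apply Cmult_neq_0 | apply circle1_sub_center_neq_0 | apply circle1_sub_neq_0; auto]. }
  assert (Cp : forall t, ccont (Fz p) (circle p 1 t)).
  { intros t. apply ccont_fdiv; auto. ccont_rational.
    repeat first [apply Cmult_neq_0 | apply circle1_sub_center_neq_0 | apply circle1_sub_neq_0; auto]. }
  assert (C3 : forall t, ccont F3 (circle p 1 t)).
  { intros t. apply ccont_fdiv; auto. ccont_rational.
    repeat first [apply Cmult_neq_0 | apply circle1_sub_center_neq_0 | apply circle1_sub_neq_0; auto]. }
  assert (CG : forall t, ccont (G z) (circle p 1 t)).
  { intros t. apply ccont_fdiv; auto. ccont_rational.
    repeat first [apply Cmult_neq_0 | apply circle1_sub_center_neq_0 | apply circle1_sub_neq_0; auto]. }
  assert (E : (circle_int (Fz z) p 1 - circle_int (Fz p) p 1 - (z - p) * circle_int F3 p 1 = (z - p) * (z - p) * circle_int (G z) p 1)%C).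
  { rewrite <- (circle_int_scal F3 p 1 (z - p)) by auto.
    rewrite <- (circle_int_scal (G z) p 1 ((z - p) * (z - p))) by auto.
    replace (circle_int (Fz z) p 1 - circle_int (Fz p) p 1 - circle_int (fun w => (z - p) * F3 w)%C p 1)%C with
      (circle_int (Fz z) p 1 + ((-1) * circle_int (Fz p) p 1 + (-1) * circle_int (fun w => (z - p) * F3 w)%C p 1))%C by ring.
    assert (C3' : forall t, ccont (fun w => (z - p) * F3 w)%C (circle p 1 t)).
    { intros t. apply ccont_mult. apply ccont_const. auto. }
    rewrite <- (circle_int_scal (Fz p)) by auto.
    rewrite <- (circle_int_scal (fun w => (z - p) * F3 w)%C) by auto.
    rewrite <- circle_int_plus.
    2: { intros t. apply ccont_mult. apply ccont_const. auto. }
    2: { intros t. apply ccont_mult. apply ccont_const. auto. }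
    rewrite <- circle_int_plus; auto.
    2: { intros t. apply ccont_plus; apply ccont_mult; try apply ccont_const; auto. }
    apply circle_int_ext. intros t. unfold Fz, F3, G. pose proof (circle1_sub_neq_0 z t Hz').
    pose proof (circle1_sub_center_neq_0 t).
    field. repeat split; auto. }
  replace (K0 * circle_int (Fz z) p 1 - K0 * circle_int (Fz p) p 1 - K0 * circle_int F3 p 1 * (z - p))%C with
    (K0 * (circle_int (Fz z) p 1 - circle_int (Fz p) p 1 - (z - p) * circle_int F3 p 1))%C by ring.
  rewrite E. ring.
Qed.

Lemma Phi_cdiff_eps : cdiff_eps Phi p D.
Proof.
  destruct (circle_Cmod_bounded f p 1 Hfc) as [M HM].
  assert (HM0 : 0 <= M)
    by (eapply Rle_trans; [apply Cmod_ge_0 | apply (HM 0)]; pose proof PI_RGT_0; lra).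
  set (Kb := Cmod K0 * (2 * PI * (1 * (2 * M))) + 1).
  assert (HKb : 0 < Kb).
  { unfold Kb. pose proof (Cmod_ge_0 K0). pose proof PI_RGT_0.
    assert (0 <= Cmod K0 * (2 * PI * (1 * (2 * M)))) by (apply Rmult_le_pos; [lra|]; nra). lra. }
  intros e He. exists (Rmin (1 / 2) (e / Kb)). split.
  { apply Rmin_pos; [lra| apply Rdiv_lt_0_compat; lra]. }
  intros z Hz. pose proof (Rmin_l (1/2) (e / Kb)). pose proof (Rmin_r (1/2) (e / Kb)).
  rewrite Phi_expansion by lra.
  assert (HCI : Cmod (circle_int (G z) p 1) <= 2 * PI * (1 * (2 * M))).
  { apply circle_int_bound. lra.
    - intros t Ht. unfold G. rewrite Cmod_mult, Cmod_inv.
      2: { apply Cmult_neq_0. apply circle1_sub_neq_0; lra.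
      repeat apply Cmult_neq_0; apply circle1_sub_center_neq_0. }
      rewrite !Cmod_mult, !Cmod_circle_sub by lra.
      assert (Hd : 1 / 2 <= Cmod (circle p 1 t - z)).
      { pose proof (Cmod_triangle_rev (circle p 1 t - p) (z - p)). rewrite Cmod_circle_sub in H1 by lra.
        replace (circle p 1 t - p - (z - p))%C with (circle p 1 t - z)%C in H1 by ring. lra. }
      replace (Cmod (circle p 1 t - z) * (1 * 1 * 1)) with (Cmod (circle p 1 t - z)) by ring.
      apply Rle_trans with (M * / (1 / 2)).
      + apply Rmult_le_compat. apply Cmod_ge_0. left; apply Rinv_0_lt_compat; lra.
        apply HM; auto. apply Rinv_le_contravar; lra.
      + right. field.
    - intros t. apply ccont_fdiv; auto. ccont_rational.
      repeat first [apply Cmult_neq_0 | apply circle1_sub_center_neq_0 | apply circle1_sub_neq_0; lra]. }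
  rewrite !Cmod_mult.
  assert (A : Cmod K0 * (Cmod (z - p) * Cmod (z - p)) * Cmod (circle_int (G z) p 1) <= Cmod (z - p) * (Cmod (z - p) * Kb)).
  { apply Rle_trans with (Cmod (z - p) * Cmod (z - p) * (Cmod K0 * (2 * PI * (1 * (2 * M))))).
    - pose proof (Cmod_ge_0 K0). pose proof (Cmod_ge_0 (z - p)).
      replace (Cmod K0 * (Cmod (z - p) * Cmod (z - p)) * Cmod (circle_int (G z) p 1)) with
        (Cmod (z - p) * Cmod (z - p) * (Cmod K0 * Cmod (circle_int (G z) p 1))) by ring.
      apply Rmult_le_compat_l. nra. apply Rmult_le_compat_l; lra.
    - unfold Kb. pose proof (Cmod_ge_0 (z - p)). nra. }
  eapply Rle_trans. apply A. rewrite (Rmult_comm e). apply Rmult_le_compat_l. apply Cmod_ge_0.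
  apply Rle_trans with (e / Kb * Kb). apply Rmult_le_compat_r; lra. right. field. lra.
Qed.

Theorem holomorphic_div_zero : exists g, holomorphic g /\ forall w, f w = ((w - p) * g w)%C.
Proof.
  set (g := fun w => if Ceq_dec w p then Phi p else (f w * / (w - p))%C).
  exists g. split.
  - intros w0. destruct (Ceq_dec w0 p) as [E|E].
    + subst w0. exists D. apply cdiff_ext with Phi (1 / 2). lra.
      * intros w Hw. unfold g. destruct (Ceq_dec w p) as [E|E]. subst; auto.
        apply Phi_off_center; auto. lra.
      * apply cdiff_eps_cdiff. apply Phi_cdiff_eps.
    + destruct (Hf w0) as [l0 Hl0]. eexists.
      apply cdiff_ext with (fun w => f w * / (w - p))%C (Cmod (w0 - p)).
      * apply Cmod_gt_0. apply Cminus_neq_0; auto.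
      * intros w Hw. unfold g. destruct (Ceq_dec w p) as [E2|E2]; auto. subst.
        rewrite Cmod_sub_sym in Hw. lra.
      * apply cdiff_mult. exact Hl0. apply (cdiff_inv (fun w => w - p)%C).
        apply (cdiff_plus (fun w => w) (fun _ => - p)%C). apply cdiff_id. apply cdiff_const.
        apply Cminus_neq_0; auto.
  - intros w. unfold g. destruct (Ceq_dec w p) as [E|E].
    + subst. rewrite Hp. ring.
    + field. apply Cminus_neq_0; auto.
Qed.

End FactorZero.

(** * Jensen's bound *)

Fixpoint dist_prod (zs : list C) (w : C) : R :=
  match zs with nil => 1 | z :: r => Cmod (z - w) * dist_prod r w end.

Lemma dist_prod_ge_0 zs w : 0 <= dist_prod zs w.
Proof. induction zs; simpl. lra. apply Rmult_le_pos; auto. apply Cmod_ge_0. Qed.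

Lemma mean_value_bound f w R M : holomorphic f -> 0 < R ->
  (forall t, 0 <= t <= 2 * PI -> Cmod (f (circle w R t)) <= M) -> Cmod (f w) <= M.
Proof.
  intros Hf HR HM.
  assert (E := cauchy_integral_formula f w R w Hf HR ltac:(replace (w - w)%C with (RtoC 0) by ring; rewrite Cmod_0; lra)).
  assert (B : Cmod (circle_int (fun z => f z * / (z - w))%C w R) <= 2 * PI * (R * (M / R))).
  { apply circle_int_bound. lra.
    - intros t Ht. assert (Hn : (circle w R t - w)%C <> 0%C)
        by (apply Cminus_neq_0; apply circle_neq_center; lra).
      rewrite Cmod_mult, Cmod_inv, Cmod_circle_sub by (auto; lra).
      unfold Rdiv. apply Rmult_le_compat_r. left; apply Rinv_0_lt_compat; lra. auto.
    - intros t. apply ccont_mult. apply holomorphic_Ccont; auto. apply ccont_inv. apply ccont_sub_const.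
      apply Cminus_neq_0; apply circle_neq_center; lra. }
  rewrite E in B. rewrite !Cmod_mult, Cmod_Ci, Cmod_R, Rabs_right in B by (pose proof PI_RGT_0; lra).
  replace (R * (M / R)) with M in B by (field; lra).
  pose proof PI_RGT_0. nra.
Qed.

Lemma Cmod_blaschke_circle (a u : C) (R : R) : Cmod u = R ->
  Cmod (RtoC (R * R) - Cconj a * u)%C = R * Cmod (u - a).
Proof.
  intros Hu.
  assert (E : RtoC (R * R) = (u * Cconj u)%C).
  { replace (R * R) with (Cmod u ^ 2) by (rewrite Hu; ring). apply Cmod2_conj. }
  rewrite E. replace (u * Cconj u - Cconj a * u)%C with (u * Cconj (u - a))%C.
  - rewrite Cmod_mult, Cmod_conj, Hu. reflexivity.
  - rewrite Cminus_conj. ring.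
Qed.

Lemma Cmult_integral (a b : C) : (a * b)%C = 0%C -> a = 0%C \/ b = 0%C.
Proof.
  intros H. destruct (Ceq_dec a 0) as [E|E]; [left; auto|right].
  replace b with (/ a * (a * b))%C by (field; auto). rewrite H. ring.
Qed.

Lemma holomorphic_mult_affine g (c a w : C) : holomorphic g ->
  holomorphic (fun z => g z * (c - a * (z - w)))%C.
Proof.
  intros Hg z. destruct (Hg z) as [l Hl]. eexists.
  apply cdiff_mult. exact Hl.
  apply (cdiff_plus (fun _ => c) (fun z => - (a * (z - w)))%C). apply cdiff_const.
  apply (cdiff_ext (fun z => (-1) * (a * (z - w)))%C _ _ _ 1). lra. intros; ring.
  apply (cdiff_mult (fun _ => (-1)%C) (fun z => a * (z - w))%C). apply cdiff_const.
  apply (cdiff_mult (fun _ => a) (fun z => z - w)%C). apply cdiff_const.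
  apply (cdiff_plus (fun z => z) (fun _ => - w)%C). apply cdiff_id. apply cdiff_const.
Qed.

(* [h] is [f] with its zero [z1] moved to the reflection of [z1] in the circle of radius [R]
   about [w], the Blaschke-factor step of Jensen's formula. *)
Lemma holomorphic_reflect_zero f z1 w R : holomorphic f -> 0 < R -> f z1 = 0%C ->
  exists h, holomorphic h /\
    (forall z, z <> z1 -> f z = 0%C -> h z = 0%C) /\
    (forall t, Cmod (h (circle w R t)) = R * Cmod (f (circle w R t))) /\
    Cmod (f w) * (R * R) = Cmod (z1 - w) * Cmod (h w).
Proof.
  intros Hf HR Hz1.
  destruct (holomorphic_div_zero f z1 Hf Hz1) as [g [Hg Hfg]].
  set (a := (z1 - w)%C).
  exists (fun z => g z * (RtoC (R * R) - Cconj a * (z - w)))%C. split; [|split; [|split]].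
  - apply holomorphic_mult_affine; auto.
  - intros z Hz Hfz. rewrite Hfg in Hfz. apply Cmult_integral in Hfz as [E|E].
    + exfalso. apply Hz. apply Ceq_minus. exact E.
    + rewrite E. ring.
  - intros t. rewrite Cmod_mult, (Cmod_blaschke_circle a (circle w R t - w) R)
      by (apply Cmod_circle_sub; lra).
    replace (circle w R t - w - a)%C with (circle w R t - z1)%C by (unfold a; ring).
    rewrite Hfg, Cmod_mult. ring.
  - rewrite (Hfg w), Cmod_mult. replace (w - w)%C with (RtoC 0) by ring. rewrite Cmult_0_r.
    replace (RtoC (R * R) - 0)%C with (RtoC (R * R)) by ring.
    rewrite Cmod_mult, Cmod_R, Rabs_right by nra.
    replace (w - z1)%C with (- a)%C by (unfold a; ring). rewrite Cmod_opp. ring.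
Qed.

Theorem jensen_bound (zs : list C) f w R M : holomorphic f -> 0 < R -> NoDup zs ->
  (forall z, In z zs -> f z = 0%C) ->
  (forall t, 0 <= t <= 2 * PI -> Cmod (f (circle w R t)) <= M) ->
  Cmod (f w) * R ^ length zs <= M * dist_prod zs w.
Proof.
  revert f M. induction zs as [|z1 zs IH]; intros f M Hf HR Hnd Hz HM; simpl.
  - rewrite !Rmult_1_r. apply mean_value_bound with R; auto.
  - inversion Hnd as [|? ? Hz1 Hnd']; subst.
    destruct (holomorphic_reflect_zero f z1 w R Hf HR (Hz z1 (or_introl eq_refl)))
      as [h [Hh [Hh0 [Hhc Hhw]]]].
    assert (IHh : Cmod (h w) * R ^ length zs <= R * M * dist_prod zs w).
    { apply IH; auto.
      - intros z Hin. apply Hh0; [intros ->; contradiction | apply Hz; right; exact Hin].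
      - intros t Ht. rewrite Hhc. apply Rmult_le_compat_l; [lra | auto]. }
    apply Rmult_le_reg_l with R; [exact HR|].
    replace (R * (Cmod (f w) * (R * R ^ length zs))) with (Cmod (f w) * (R * R) * R ^ length zs)
      by ring.
    rewrite Hhw.
    replace (R * (M * (Cmod (z1 - w) * dist_prod zs w)))
      with (Cmod (z1 - w) * (R * M * dist_prod zs w)) by ring.
    rewrite Rmult_assoc. apply Rmult_le_compat_l; [apply Cmod_ge_0 | exact IHh].
Qed.

Lemma dist_prod_le zs w B : 0 <= B -> (forall z, In z zs -> Cmod (z - w) <= B) ->
  dist_prod zs w <= B ^ length zs.
Proof.
  intros HB. induction zs as [|z zs IH]; intros H; simpl. lra.
  apply Rmult_le_compat. apply Cmod_ge_0. apply dist_prod_ge_0. apply H; left; auto.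
  apply IH. intros; apply H; right; auto.
Qed.

Lemma zeros_growth_bound f zs w r E M : holomorphic f -> 0 < r -> 0 < E -> NoDup zs ->
  (forall z, In z zs -> f z = 0%C) -> (forall z, In z zs -> Cmod (z - w) <= r) ->
  (forall t, 0 <= t <= 2 * PI -> Cmod (f (circle w (E * r) t)) <= M) ->
  Cmod (f w) * E ^ length zs <= M.
Proof.
  intros Hf Hr HE Hnd Hz Hzr HM.
  assert (HM0 : 0 <= M).
  { eapply Rle_trans; [apply Cmod_ge_0 | apply (HM 0)]. pose proof PI_RGT_0; lra. }
  assert (J := jensen_bound zs f w (E * r) M Hf ltac:(nra) Hnd Hz HM).
  apply Rmult_le_reg_r with (r ^ length zs); [apply pow_lt; lra|].
  rewrite Rmult_assoc, <- Rpow_mult_distr.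
  eapply Rle_trans; [exact J|]. apply Rmult_le_compat_l; [lra|].
  apply dist_prod_le; [lra | exact Hzr].
Qed.

Lemma exp_le x y : x <= y -> exp x <= exp y.
Proof. intros H. destruct (Rle_lt_or_eq_dec x y H). left; apply exp_increasing; auto. subst; lra. Qed.

Lemma Rpower_pos x y : 0 < Rpower x y.
Proof. unfold Rpower. apply exp_pos. Qed.

Lemma Rpower_inv_pow x r : 0 < x -> 0 < r -> Rpower (Rpower x (1 / r)) r = x.
Proof.
  intros Hx Hr. rewrite Rpower_mult. replace (1 / r * r) with 1 by (field; lra). apply Rpower_1; auto.
Qed.

Lemma Rpower_pow_inv x r : 0 < x -> 0 < r -> Rpower (Rpower x r) (1 / r) = x.
Proof.
  intros Hx Hr. rewrite Rpower_mult. replace (r * (1 / r)) with 1 by (field; lra). apply Rpower_1; auto.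
Qed.

Lemma abspow_nonneg x r : 0 <= abspow x r.
Proof. unfold abspow. destruct (Rle_lt_dec (Rabs x) 0). lra. left; apply Rpower_pos. Qed.

Lemma abspow_le y B r : Rabs y <= B -> 0 < B -> 0 <= r -> abspow y r <= Rpower B r.
Proof.
  intros H HB Hr. unfold abspow. destruct (Rle_lt_dec (Rabs y) 0).
  - left; apply Rpower_pos.
  - apply Rle_Rpower_l; auto.
Qed.

Lemma C_decomp (z : C) : (RtoC (fst z) + Ci * RtoC (snd z))%C = z.
Proof. destruct z as [x y]. unfold RtoC, Ci, Cplus, Cmult; simpl. f_equal; ring. Qed.

Lemma entire_holomorphic f : entire f -> holomorphic f.
Proof.
  intros H z. destruct (entire_cdiff_eps f H z) as [l Hl]. exists l. apply cdiff_eps_cdiff; auto.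
Qed.

Lemma Gspace_circle_bound a b rho K f w R t : 0 <= a -> 0 <= b -> 0 < rho -> 0 <= K -> 0 < R ->
  (forall x y, Cmod (f (RtoC x + Ci * RtoC y)%C) <= K * exp (- a * abspow x rho + b * abspow y rho)) ->
  Cmod (f (circle w R t)) <= K * exp (b * Rpower (Cmod w + R) rho).
Proof.
  intros Ha Hb Hrho HK HR Hf.
  rewrite <- (C_decomp (circle w R t)). eapply Rle_trans; [apply Hf|].
  apply Rmult_le_compat_l; [exact HK|]. apply exp_le.
  assert (0 <= a * abspow (fst (circle w R t)) rho) by (apply Rmult_le_pos; [lra | apply abspow_nonneg]).
  assert (abspow (snd (circle w R t)) rho <= Rpower (Cmod w + R) rho).
  { apply abspow_le; [| pose proof (Cmod_ge_0 w); lra | lra].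
    eapply Rle_trans; [apply Cmod_snd|].
    replace (circle w R t) with (w + (circle w R t - w))%C by ring.
    eapply Rle_trans; [apply Cmod_triangle|]. rewrite Cmod_circle_sub by lra. lra. }
  assert (b * abspow (snd (circle w R t)) rho <= b * Rpower (Cmod w + R) rho)
    by (apply Rmult_le_compat_l; lra).
  lra.
Qed.

Fixpoint sym_zeros (lam : nat -> R) (k : nat) : list C :=
  match k with
  | O => RtoC (lam 0%nat) :: RtoC (- lam 0%nat) :: nil
  | S j => RtoC (lam (S j)) :: RtoC (- lam (S j)) :: sym_zeros lam j
  end.

Section SymZeros.
Variable lam : nat -> R.
Hypothesis Hpos : forall k, 0 < lam k.
Hypothesis Hinc : forall k, lam k < lam (S k).

Lemma lam_mono j k : (j <= k)%nat -> lam j <= lam k.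
Proof. induction 1. lra. pose proof (Hinc m). lra. Qed.

Lemma sym_zeros_length k : length (sym_zeros lam k) = (2 * k + 2)%nat.
Proof. induction k; simpl; auto. rewrite IHk. lia. Qed.

Lemma sym_zeros_in k z : In z (sym_zeros lam k) ->
  exists j, (j <= k)%nat /\ (z = RtoC (lam j) \/ z = RtoC (- lam j)).
Proof.
  induction k as [|k IH]; simpl; intros H.
  - destruct H as [H|[H|H]]; [exists 0%nat; auto | exists 0%nat; auto | contradiction].
  - destruct H as [H|[H|H]]; [exists (S k); auto | exists (S k); auto |].
    destruct (IH H) as [j [Hj E]]. exists j. split; auto.
Qed.

Lemma sym_zeros_Cmod k z : In z (sym_zeros lam k) -> Cmod z <= lam k.
Proof.
  intros H. destruct (sym_zeros_in k z H) as [j [Hj [E|E]]]; subst; rewrite Cmod_R.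
  - rewrite Rabs_right by (pose proof (Hpos j); lra). apply lam_mono; auto.
  - rewrite Rabs_Ropp, Rabs_right by (pose proof (Hpos j); lra). apply lam_mono; auto.
Qed.

Lemma sym_zeros_NoDup k : NoDup (sym_zeros lam k).
Proof.
  induction k as [|k IH]; simpl.
  - constructor. simpl. intros [E|E]; [|auto]. apply RtoC_inj in E. pose proof (Hpos 0%nat). lra.
    constructor. simpl; auto. constructor.
  - assert (notin : forall x, Rabs x = lam (S k) -> ~ In (RtoC x) (sym_zeros lam k)).
    { intros x Hx Hin. apply sym_zeros_Cmod in Hin. rewrite Cmod_R, Hx in Hin. pose proof (Hinc k).
      lra. }
    constructor.
    + simpl. intros [E|E].
      * apply RtoC_inj in E. pose proof (Hpos (S k)). lra.
      * apply (notin (lam (S k))); auto. rewrite Rabs_right; auto. pose proof (Hpos (S k)). lra.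
    + constructor; auto. apply notin. rewrite Rabs_Ropp, Rabs_right; auto. pose proof (Hpos (S k)). lra.
Qed.

End SymZeros.

Lemma nat_unbounded X : exists n : nat, X < INR n.
Proof.
  destruct (archimed X) as [H1 _]. exists (Z.to_nat (up X)).
  destruct (Z_lt_le_dec (up X) 0) as [L|L].
  - apply IZR_lt in L. pose proof (pos_INR (Z.to_nat (up X))). lra.
  - rewrite INR_IZR_INZ, Z2Nat.id; auto.
Qed.

Lemma LimInf_seq_lt_frequently (u : nat -> R) (c : R) : Rbar_lt (LimInf_seq u) c ->
  exists c1, c1 < c /\ forall N, exists k, (N <= k)%nat /\ u k < c1.
Proof.
  intros H. assert (HL := proj2_sig (ex_LimInf_seq u)). fold (LimInf_seq u) in HL.
  destruct (LimInf_seq u) as [L| |] eqn:E; simpl in H.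
  - exists ((L + c) / 2). split. lra. intros N.
    assert (He : 0 < (c - L) / 2) by lra.
    destruct (HL (mkposreal _ He)) as [A _]. destruct (A N) as [n [Hn1 Hn2]]. exists n. split; auto.
    simpl in Hn2. lra.
  - contradiction.
  - exists (c - 1). split. lra. intros N. destruct (HL (c - 1) N) as [n [Hn1 Hn2]]. exists n. auto.
Qed.

Lemma Rpower_exp_root rho c x : 0 < rho -> 0 < c -> 0 < x ->
  Rpower (exp (1 / rho) * c * Rpower x (1 / rho)) rho = exp 1 * Rpower c rho * x.
Proof.
  intros Hrho Hc Hx.
  rewrite <- !Rpower_mult_distr by (try apply Rmult_lt_0_compat; auto using exp_pos, Rpower_pos).
  rewrite Rpower_inv_pow by lra.
  replace (Rpower (exp (1 / rho)) rho) with (exp 1)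
    by (unfold Rpower; rewrite ln_exp; f_equal; field; lra).
  reflexivity.
Qed.

Lemma radius_le_scaled q E c1 c2 s l : 0 <= q -> 0 < E -> c1 < c2 ->
  q * (1 + E) / (E * (c2 - c1)) <= s -> l < c1 * s -> q + E * (l + q) <= E * c2 * s.
Proof.
  intros Hq HE Hc Hs Hl.
  apply Rle_div_l in Hs; [|apply Rmult_lt_0_compat; lra].
  assert (E * l <= E * (c1 * s)) by (apply Rmult_le_compat_l; lra).
  nra.
Qed.

Lemma below_critical_constant rho b c : 0 < rho -> 0 < b -> 0 < c ->
  c < Rpower (2 / (b * rho * exp 1)) (1 / rho) -> b * (exp 1 * Rpower c rho) < 2 / rho.
Proof.
  intros Hrho Hb Hc Hlt. pose proof (exp_pos 1).
  assert (X : Rpower c rho < 2 / (b * rho * exp 1)).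
  { assert (H0 : 0 < 2 / (b * rho * exp 1))
      by (apply Rdiv_lt_0_compat; [lra | repeat apply Rmult_lt_0_compat; auto]).
    rewrite <- (Rpower_inv_pow (2 / (b * rho * exp 1)) rho) by auto.
    apply Rlt_Rpower_l; lra. }
  apply Rlt_le_trans with (b * (exp 1 * (2 / (b * rho * exp 1)))).
  - apply Rmult_lt_compat_l; auto. apply Rmult_lt_compat_l; auto.
  - right. field. repeat split; lra.
Qed.

Lemma liminf_root_growth rho b q C (lam : nat -> R) :
  1 < rho -> 0 < b -> 0 <= q -> (forall k, 0 < lam k) ->
  Rbar_lt (LimInf_seq (fun k => lam k / Rpower (INR k) (1 / rho)))
          (Rpower (2 / (b * rho * exp 1)) (1 / rho)) ->
  exists k, C + b * Rpower (q + exp (1 / rho) * (lam k + q)) rho < 2 * INR k / rho.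
Proof.
  intros Hrho Hb Hq Hpos Hlim.
  set (E := exp (1 / rho)). assert (HE : 0 < E) by apply exp_pos.
  set (c0 := Rpower (2 / (b * rho * exp 1)) (1 / rho)). assert (Hc0 : 0 < c0) by apply Rpower_pos.
  destruct (LimInf_seq_lt_frequently _ c0 Hlim) as [c1' [Hc1' Hfreq]].
  set (c1 := Rmax c1' (c0 / 2)).
  assert (c1' <= c1) by apply Rmax_l. assert (c0 / 2 <= c1) by apply Rmax_r.
  assert (Hc1 : c1 < c0) by (apply Rmax_lub_lt; lra).
  set (c2 := (c1 + c0) / 2).
  set (beta := b * (exp 1 * Rpower c2 rho)).
  assert (Hbeta : beta < 2 / rho) by (apply below_critical_constant; fold c0; unfold c2; lra).
  set (T := q * (1 + E) / (E * (c2 - c1))).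
  destruct (nat_unbounded (Rmax (Rpower (T + 1) rho) ((Rabs C + 1) / (2 / rho - beta)))) as [N HN].
  assert (HN1 : Rpower (T + 1) rho < INR N) by (eapply Rle_lt_trans; [apply Rmax_l | exact HN]).
  assert (HN2 : (Rabs C + 1) / (2 / rho - beta) < INR N)
    by (eapply Rle_lt_trans; [apply Rmax_r | exact HN]).
  destruct (Hfreq N) as [k [HNk Hk]]. exists k.
  assert (HkN : INR N <= INR k) by (apply le_INR; auto).
  assert (Hk0 : 0 < INR k) by (pose proof (Rpower_pos (T + 1) rho); lra).
  set (s := Rpower (INR k) (1 / rho)). assert (Hs0 : 0 < s) by apply Rpower_pos.
  assert (Hlam : lam k < c1 * s) by (apply Rlt_div_l; [lra | fold s in Hk; lra]).
  assert (HT : 0 <= T)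
    by (unfold T; apply Rdiv_le_0_compat; [nra | apply Rmult_lt_0_compat; unfold c2; lra]).
  assert (Hs : T <= s).
  { assert (T + 1 <= s); [|lra].
    rewrite <- (Rpower_pow_inv (T + 1) rho) by lra. apply Rle_Rpower_l.
    - apply Rlt_le, Rdiv_lt_0_compat; lra.
    - split; [apply Rpower_pos | lra]. }
  assert (HP : Rpower (q + E * (lam k + q)) rho <= exp 1 * Rpower c2 rho * INR k).
  { rewrite <- (Rpower_exp_root rho c2 (INR k)) by (unfold c2; lra).
    apply Rle_Rpower_l; [lra|]. split.
    - pose proof (Hpos k). nra.
    - apply radius_le_scaled with c1; unfold c2 in *; auto; lra. }
  assert (Hgap : (Rabs C + 1) < (2 / rho - beta) * INR k).
  { apply Rlt_div_l in HN2; nra. }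
  assert (b * Rpower (q + E * (lam k + q)) rho <= beta * INR k).
  { unfold beta. replace (b * (exp 1 * Rpower c2 rho) * INR k)
      with (b * (exp 1 * Rpower c2 rho * INR k)) by ring.
    apply Rmult_le_compat_l; lra. }
  pose proof (Rle_abs C).
  replace (2 * INR k / rho) with (2 / rho * INR k) by (field; lra).
  nra.
Qed.

Lemma exp_pow_INR x n : exp x ^ n = exp (INR n * x).
Proof.
  rewrite <- Rpower_pow by apply exp_pos. unfold Rpower. rewrite ln_exp. reflexivity.
Qed.

Theorem proposition1 (rho a b : R) (lam : nat -> R)
  (Hrho : 1 < rho) (Ha : 0 < a) (Hb : 0 < b)
  (Hpos : forall k, 0 < lam k)
  (Hinc : forall k, lam k < lam (S k))
  (Hliminf : Rbar_lt (LimInf_seq (fun k => lam k / Rpower (INR k) (1 / rho)))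
                     (Rpower (2 / (b * rho * exp 1)) (1 / rho))) :
  uniqueness_set (Gspace a b rho)
    (fun z : C => exists k : nat, z = RtoC (lam k) \/ z = RtoC (- lam k)).
Proof.
  intros f [Hent [K [HK Hbd]]] Hzero z0.
  destruct (Ceq_dec (f z0) 0) as [E0|Hfz0]; [exact E0 | exfalso].
  assert (Hf0 : 0 < Cmod (f z0)) by (apply Cmod_gt_0; exact Hfz0).
  set (q := Cmod z0). assert (Hq : 0 <= q) by apply Cmod_ge_0.
  destruct (liminf_root_growth rho b q (ln K - ln (Cmod (f z0))) lam Hrho Hb Hq Hpos Hliminf)
    as [k Hk].
  set (E := exp (1 / rho)) in Hk. set (r := lam k + q) in Hk.
  assert (Hr : 0 < r) by (unfold r; pose proof (Hpos k); lra).
  assert (J : Cmod (f z0) * E ^ length (sym_zeros lam k) <= K * exp (b * Rpower (q + E * r) rho)).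
  { apply (zeros_growth_bound f (sym_zeros lam k) z0 r E).
    - exact (entire_holomorphic f Hent).
    - exact Hr.
    - apply exp_pos.
    - exact (sym_zeros_NoDup lam Hpos Hinc k).
    - intros z Hin. destruct (sym_zeros_in lam k z Hin) as [j [_ Hj]]. apply Hzero. exists j. exact Hj.
    - intros z Hin. pose proof (sym_zeros_Cmod lam Hpos Hinc k z Hin).
      replace (z - z0)%C with (z + - z0)%C by ring.
      eapply Rle_trans; [apply Cmod_triangle|]. rewrite Cmod_opp. unfold r, q. lra.
    - intros t _. apply Gspace_circle_bound with a; try lra; [|exact Hbd].
      unfold E. pose proof (exp_pos (1 / rho)). nra. }
  rewrite sym_zeros_length in J. unfold E in J. rewrite exp_pow_INR in J.
  apply ln_le in J; [|apply Rmult_lt_0_compat; [lra | apply exp_pos]].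
  rewrite !ln_mult, !ln_exp in J by (auto using exp_pos).
  rewrite plus_INR, mult_INR in J. simpl INR in J. fold E in J.
  assert (2 * INR k / rho <= (2 * INR k + 2) * (1 / rho)).
  { unfold Rdiv. rewrite Rmult_1_l. apply Rmult_le_compat_r; [|lra].
    left. apply Rinv_0_lt_compat. lra. }
  lra.
Qed.
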